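(* Let $h\ge2$ be an integer and let $\zeta=e^{2\pi i/h}$. For real $t$ and $r$, define the generalized binomial series \[ \big(\mathcal{B}_{t}(x)\big)^r = \sum_{n \geq 0}\binom{tn+r}{n}\frac{r}{tn+r}x^n \] (the left-hand side is notation for this power series; the term for $n=0$ is $1$). Define \[ r_h = \tfrac{1}{2}\,\mathcal{B}_{h+1}\!\Big(\tfrac{1}{2^{h+1}}\Big),\qquad r_j = \zeta^{-j}\,2^{1/h}\,\mathcal{B}_{(h+1)/h}\!\Big(\zeta^j \big(\tfrac{1}{2}\big)^{(h+1)/h}\Big)^{-1/h}\quad (0\le j\le h-1), \] where $\mathcal{B}_{h+1}(x)$ means $(\mathcal{B}_{h+1}(x))^1$, and $2^{1/h}$, $(1/2)^{(h+1)/h}$ denote positive real roots. Then $r_0,\dots,r_h$ are the $h+1$ roots of the polynomial $1-2z+z^{h+1}$, so that $1-2z+z^{h+1}=\prod_{i=0}^h(z-r_i)$, and for every $n\ge0$, \[ [z^n]\frac{1}{1-2z+z^{h+1}} = -\sum_{i = 0}^h \frac{1}{r_i^{\,n+1}}\prod_{\substack{j = 0\\ j \neq i}}^{h}(r_i - r_j)^{-1}. \]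
   Context: Here $[z^n]F(z)$ denotes the coefficient of $z^n$ in the power series expansion of $F$ at $z=0$. The generalized $h$-bonacci numbers, defined by $u_{n+h}=u_{n+h-1}+\cdots+u_n$ with the usual initial values, have generating function $\frac{z}{1-z-\cdots-z^h}=\frac{z(1-z)}{1-2z+z^{h+1}}$, so this gives a Binet-type formula for them. *)

From Stdlib Require Import Reals Factorial.
From Coquelicot Require Import Coquelicot.
Open Scope R_scope.

Fixpoint falling (a : R) (n : nat) : R :=
  match n with O => 1 | S m => falling a m * (a - INR m) end.

Definition gbinom (a : R) (n : nat) : R := falling a n / INR (fact n).

Definition Bcoef (t r : R) (n : nat) : R :=
  match n with
  | O => 1
  | S _ => gbinom (t * INR n + r) n * r / (t * INR n + r)
  end.

Definition Bterm (t r : R) (x : C) (n : nat) : C := (RtoC (Bcoef t r n) * Cpow x n)%C.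

(* value of a complex series (componentwise real Series; meaningful when convergent) *)
Definition CSeries (a : nat -> C) : C :=
  (Series (fun n => fst (a n)), Series (fun n => snd (a n))).

Definition Bpow (t r : R) (x : C) : C := CSeries (Bterm t r x).

Definition zeta (h : nat) : C := (cos (2 * PI / INR h), sin (2 * PI / INR h)).

Definition root_r (h : nat) (i : nat) : C :=
  if Nat.eqb i h then
    (RtoC (1/2) * Bpow (INR h + 1) 1 (RtoC (1 / 2 ^ (h + 1))))%C
  else
    (/ Cpow (zeta h) i * RtoC (Rpower 2 (1 / INR h)) *
     Bpow ((INR h + 1) / INR h) (- (1 / INR h))
          (Cpow (zeta h) i * RtoC (Rpower (1/2) ((INR h + 1) / INR h))))%C.

Fixpoint csum (f : nat -> C) (N : nat) : C :=
  match N with O => RtoC 0 | S m => (csum f m + f m)%C end.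
Fixpoint cprod (f : nat -> C) (N : nat) : C :=
  match N with O => RtoC 1 | S m => (cprod f m * f m)%C end.

Definition is_expansion_at0 (F : C -> C) (a : nat -> C) : Prop :=
  exists rho : R, 0 < rho /\
    forall z : C, Cmod z < rho -> @is_pseries C_AbsRing C_NormedModule a z (F z).

From Stdlib Require Import Reals Lra Lia Factorial Ranalysis5.
From Coquelicot Require Import Coquelicot.
Open Scope R_scope.

(* The coefficients [r/(t n + r) binom(t n + r, n)] of [B_t(x)^r] satisfy the Hagen-Rothe
   convolution identity, so [B_t(x)^r B_t(x)^s = B_t(x)^(r+s)] wherever the series converge
   absolutely. This gives [B = 1 + x B^(h+1)] for [B = B_{h+1}(x)] and [g - g^(h+1) = x] for
   [g = B_{(h+1)/h}(x)^(-1/h)], and each [r_i] is a root of [1 - 2z + z^(h+1)] by substitution.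

   The roots are distinct: [r_h] is real in [[1/2, 9/10]] while [|r_j| >= 1] for [j < h].
   For [j < h], [r_j] is [zeta^(-j) 2^(1/h) g(x_j)] with [|x_j| = (1/2)^((h+1)/h)]; the
   coefficients of [g] beyond the first are nonpositive and [g((1/2)^((h+1)/h)) = 2^(-1/h)],
   so every [g(x_j)] lies within [1 - 2^(-1/h)] of [1], too close for two of them to differ
   by a nontrivial [h]-th root of unity. With distinct roots the trinomial is
   [prod_i (z - r_i)], and partial fractions and geometric series expand its reciprocal. *)

(** * Rothe coefficients *)

Fixpoint rising (a : R) (m : nat) : R :=
  match m with O => 1 | S k => rising a k * (a + INR k) end.

Lemma rising_succ_l a m : rising a (S m) = a * rising (a + 1) m.
Proof.
  induction m as [|m IH]; [simpl; ring|].
  change (rising a (S (S m))) with (rising a (S m) * (a + INR (S m))).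
  change (rising (a + 1) (S m)) with (rising (a + 1) m * (a + 1 + INR m)).
  rewrite IH, S_INR. ring.
Qed.

Lemma rising_add a m n : rising a (m + n) = rising a m * rising (a + INR m) n.
Proof.
  induction n as [|n IH]; simpl.
  - rewrite Nat.add_0_r. ring.
  - rewrite Nat.add_succ_r. simpl. rewrite IH, plus_INR. ring.
Qed.

Lemma rising_pos a m : 0 < a -> 0 < rising a m.
Proof.
  intros Ha. induction m as [|m IH]; simpl; [lra|].
  pose proof (pos_INR m). apply Rmult_lt_0_compat; lra.
Qed.

Lemma scaled_rising_le a b lo1 lo2 k :
  (forall i, (i < k)%nat -> 0 <= a * (lo1 + INR i) <= b * (lo2 + INR i)) ->
  0 <= a ^ k * rising lo1 k <= b ^ k * rising lo2 k.
Proof.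
  induction k as [|k IH]; intros H; simpl; [lra|].
  destruct (IH (fun i Hi => H i ltac:(lia))) as [H0 H1].
  destruct (H k ltac:(lia)) as [H2 H3].
  replace (a * a ^ k * (rising lo1 k * (lo1 + INR k)))
    with ((a ^ k * rising lo1 k) * (a * (lo1 + INR k))) by ring.
  replace (b * b ^ k * (rising lo2 k * (lo2 + INR k)))
    with ((b ^ k * rising lo2 k) * (b * (lo2 + INR k))) by ring.
  split; [apply Rmult_le_pos | apply Rmult_le_compat]; lra.
Qed.

Lemma falling_rising a n : falling a n = rising (a - INR n + 1) n.
Proof.
  induction n as [|n IH]; [reflexivity|].
  simpl falling. rewrite IH, rising_succ_l, S_INR.
  replace (a - (INR n + 1) + 1 + 1) with (a - INR n + 1) by ring. ring.
Qed.

Lemma INR_fact_pos n : 0 < INR (fact n).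
Proof. apply lt_0_INR, lt_O_fact. Qed.

(* [rothe t r n] is [Bcoef t r n] with the factor [t n + r] cancelled, so it is
   also defined (and polynomial in [r]) where [t n + r = 0]. *)
Definition rothe (t r : R) (n : nat) : R :=
  match n with
  | O => 1
  | S m => r * rising (t * INR (S m) + r - INR m) m / INR (fact (S m))
  end.

Lemma Bcoef_rothe t r n :
  (forall m, t * INR (S m) + r <> 0) -> Bcoef t r n = rothe t r n.
Proof.
  intros H. destruct n as [|m]; [reflexivity|].
  unfold Bcoef, rothe, gbinom. rewrite falling_rising.
  set (a := t * INR (S m) + r).
  replace (a - INR (S m) + 1) with (a - INR m) by (rewrite S_INR; ring).
  replace (t * INR (S m) + r - INR m) with (a - INR m) by reflexivity.
  change (rising (a - INR m) (S m)) with (rising (a - INR m) m * (a - INR m + INR m)).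
  pose proof (H m) as Ha. fold a in Ha. pose proof (INR_fact_pos (S m)).
  replace (a - INR m + INR m) with a by ring. field. lra.
Qed.

Lemma rothe_0_l t n : rothe t 0 n = if Nat.eqb n 0 then 1 else 0.
Proof. destruct n; simpl; [reflexivity | unfold Rdiv; ring]. Qed.

Lemma rothe_succ_sub1 t r m :
  rothe t r (S m) - rothe t (r - 1) (S m) = rothe t (r - 1 + t) m.
Proof.
  destruct m as [|j]; [simpl; field|].
  unfold rothe.
  set (L := t * INR (S (S j)) + r - INR (S j)).
  replace (t * INR (S (S j)) + (r - 1) - INR (S j)) with (L - 1) by (unfold L; ring).
  replace (t * INR (S j) + (r - 1 + t) - INR j) with L by (unfold L; rewrite !S_INR; ring).
  rewrite (rising_succ_l (L - 1)). replace (L - 1 + 1) with L by ring.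
  change (rising L (S j)) with (rising L j * (L + INR j)).
  change (fact (S (S j))) with (S (S j) * fact (S j))%nat. rewrite mult_INR.
  pose proof (INR_fact_pos (S j)). pose proof (pos_INR j).
  assert (HL : L = t * (INR j + 2) + r - (INR j + 1)) by (unfold L; rewrite !S_INR; ring).
  rewrite HL, !S_INR. field. lra.
Qed.

(** * Polynomial functions and the Hagen-Rothe identity *)

Lemma Cmult_eq_0_r (x y : C) : (x * y = 0)%C -> x <> 0%C -> y = 0%C.
Proof. intros H Hx. replace y with (/ x * (x * y))%C by (field; auto). rewrite H. ring. Qed.

Fixpoint is_poly (d : nat) (p : C -> C) : Prop :=
  match d with
  | O => exists c, forall z, p z = c
  | S d' => exists q c, is_poly d' q /\ forall z, p z = (z * q z + c)%C
  end.

Lemma is_poly_ext d p q : is_poly d p -> (forall z, p z = q z) -> is_poly d q.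
Proof.
  destruct d as [|d]; simpl.
  - intros [c Hc] H. exists c. intros z. rewrite <- H. auto.
  - intros [p' [c [Hp' Hp]]] H. exists p', c. split; auto. intros z. rewrite <- H. auto.
Qed.

Lemma is_poly_const d c : is_poly d (fun _ => c).
Proof.
  revert c. induction d as [|d IH]; intros c; simpl.
  - exists c. auto.
  - exists (fun _ => 0%C), c. split; [apply IH | intros; ring].
Qed.

Lemma is_poly_succ d p : is_poly d p -> is_poly (S d) p.
Proof.
  revert p. induction d as [|d IH]; intros p H.
  - destruct H as [c Hc]. exists (fun _ => 0%C), c.
    split; [exists 0%C; auto | intros z; rewrite Hc; ring].
  - destruct H as [q [c [Hq Hp]]]. exists q, c. auto.
Qed.

Lemma is_poly_le d e p : (d <= e)%nat -> is_poly d p -> is_poly e p.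
Proof. induction 1; auto using is_poly_succ. Qed.

Lemma is_poly_plus d p q : is_poly d p -> is_poly d q -> is_poly d (fun z => p z + q z)%C.
Proof.
  revert p q. induction d as [|d IH]; intros p q Hp Hq.
  - destruct Hp as [c1 H1], Hq as [c2 H2]. exists (c1 + c2)%C. intros. rewrite H1, H2. auto.
  - destruct Hp as [p1 [c1 [Hp1 H1]]], Hq as [q1 [c2 [Hq1 H2]]].
    exists (fun z => p1 z + q1 z)%C, (c1 + c2)%C. split; auto.
    intros. rewrite H1, H2. ring.
Qed.

Lemma is_poly_scal d p c : is_poly d p -> is_poly d (fun z => c * p z)%C.
Proof.
  revert p. induction d as [|d IH]; intros p Hp.
  - destruct Hp as [c1 H1]. exists (c * c1)%C. intros. rewrite H1. auto.
  - destruct Hp as [p1 [c1 [Hp1 H1]]].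
    exists (fun z => c * p1 z)%C, (c * c1)%C. split; auto.
    intros. rewrite H1. ring.
Qed.

Lemma is_poly_mulX d p : is_poly d p -> is_poly (S d) (fun z => z * p z)%C.
Proof. intros H. exists p, 0%C. split; auto. intros. ring. Qed.

Lemma is_poly_mul_lin d p a : is_poly d p -> is_poly (S d) (fun z => (z - a) * p z)%C.
Proof.
  intros H. apply is_poly_ext with (fun z => z * p z + (- a) * p z)%C.
  - apply is_poly_plus; [apply is_poly_mulX | apply is_poly_succ, is_poly_scal]; auto.
  - intros. ring.
Qed.

Lemma is_poly_pow n : is_poly n (fun z => Cpow z n).
Proof.
  induction n as [|n IH]; [exists 1%C; auto|].
  apply is_poly_ext with (fun z => z * Cpow z n)%C; auto using is_poly_mulX.
Qed.

Lemma is_poly_csum d (f : nat -> C -> C) N :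
  (forall i, (i < N)%nat -> is_poly d (f i)) -> is_poly d (fun z => csum (fun i => f i z) N).
Proof.
  induction N as [|N IH]; intros H; simpl; [apply is_poly_const|].
  apply is_poly_plus; [apply IH; intros; apply H | apply H]; lia.
Qed.

Lemma is_poly_factor d p a :
  is_poly (S d) p -> exists q, is_poly d q /\ forall z, p z = ((z - a) * q z + p a)%C.
Proof.
  revert p. induction d as [|d IH]; intros p Hp.
  - destruct Hp as [q [c [[c0 Hq] Hp]]].
    exists (fun _ => c0). split; [exists c0; auto|].
    intros z. rewrite !Hp, !Hq. ring.
  - destruct Hp as [q [c [Hq Hp]]].
    destruct (IH q Hq) as [q1 [Hq1 Eq1]].
    exists (fun z => z * q1 z + q a)%C. split.
    + apply is_poly_plus; [apply is_poly_mulX; auto | apply is_poly_const].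
    + intros z. rewrite !Hp, (Eq1 z). ring.
Qed.

Lemma is_poly_eq_0 d p (x : nat -> C) :
  is_poly d p ->
  (forall i j, (i <= d)%nat -> (j <= d)%nat -> i <> j -> x i <> x j) ->
  (forall i, (i <= d)%nat -> p (x i) = 0%C) -> forall z, p z = 0%C.
Proof.
  revert p x. induction d as [|d IH]; intros p x Hp Hx Hpx z.
  - destruct Hp as [c Hc]. rewrite Hc, <- (Hc (x 0%nat)). apply Hpx. lia.
  - destruct (is_poly_factor d p (x 0%nat) Hp) as [q [Hq Eq]].
    assert (Hp0 : p (x 0%nat) = 0%C) by (apply Hpx; lia).
    assert (Hq0 : forall z, q z = 0%C).
    { apply (IH q (fun i => x (S i)) Hq).
      - intros i j Hi Hj Hij. apply Hx; lia.
      - intros i Hi. apply Cmult_eq_0_r with (x (S i) - x 0%nat)%C.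
        + assert (H := Hpx (S i) ltac:(lia)). rewrite Eq, Hp0 in H. rewrite <- H. ring.
        + apply Cminus_eq_contra, Hx; lia. }
    rewrite Eq, Hp0, Hq0. ring.
Qed.

Definition is_rpoly (d : nat) (p : R -> R) : Prop :=
  exists P, is_poly d P /\ forall x, P (RtoC x) = RtoC (p x).

Lemma is_rpoly_ext d p q : is_rpoly d p -> (forall x, p x = q x) -> is_rpoly d q.
Proof. intros [P [HP EP]] H. exists P. split; auto. intros x. rewrite EP, H. auto. Qed.

Lemma is_rpoly_le d e p : (d <= e)%nat -> is_rpoly d p -> is_rpoly e p.
Proof. intros Hde [P [HP EP]]. exists P. split; auto. apply is_poly_le with d; auto. Qed.

Lemma is_rpoly_const d c : is_rpoly d (fun _ => c).
Proof. exists (fun _ => RtoC c). split; auto using is_poly_const. Qed.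

Lemma is_rpoly_plus d p q : is_rpoly d p -> is_rpoly d q -> is_rpoly d (fun x => p x + q x).
Proof.
  intros [P [HP EP]] [Q [HQ EQ]]. exists (fun z => P z + Q z)%C.
  split; [apply is_poly_plus; auto | intros x; rewrite EP, EQ, RtoC_plus; auto].
Qed.

Lemma is_rpoly_scal d p c : is_rpoly d p -> is_rpoly d (fun x => c * p x).
Proof.
  intros [P [HP EP]]. exists (fun z => RtoC c * P z)%C.
  split; [apply is_poly_scal; auto | intros x; rewrite EP, RtoC_mult; auto].
Qed.

Lemma is_rpoly_mul_lin d p a : is_rpoly d p -> is_rpoly (S d) (fun x => (x + a) * p x).
Proof.
  intros [P [HP EP]]. exists (fun z => (z - RtoC (- a)) * P z)%C.
  split; [apply is_poly_mul_lin; auto|].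
  intros x. rewrite EP, <- RtoC_minus, <- RtoC_mult. f_equal. ring.
Qed.

Lemma is_rpoly_sum d (f : nat -> R -> R) N :
  (forall k, (k <= N)%nat -> is_rpoly d (f k)) ->
  is_rpoly d (fun x => sum_f_R0 (fun k => f k x) N).
Proof.
  induction N as [|N IH]; intros H; simpl; [apply H; lia|].
  apply is_rpoly_plus; [apply IH; intros; apply H | apply H]; lia.
Qed.

Lemma is_rpoly_eq_0 d p :
  is_rpoly d p -> (forall k, (k <= d)%nat -> p (INR k) = 0) -> forall x, p x = 0.
Proof.
  intros [P [HP EP]] Hp x. apply RtoC_inj. rewrite <- EP.
  apply (is_poly_eq_0 d P (fun k => RtoC (INR k)) HP).
  - intros i j _ _ Hij E. apply Hij, INR_eq. apply (f_equal fst) in E. exact E.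
  - intros k Hk. rewrite EP, Hp; auto.
Qed.

Lemma is_rpoly_rising c m : is_rpoly m (fun r => rising (c + r) m).
Proof.
  induction m as [|m IH]; [apply (is_rpoly_const 0 1)|].
  apply is_rpoly_ext with (fun r => (r + (c + INR m)) * rising (c + r) m).
  - apply is_rpoly_mul_lin, IH.
  - intros r. simpl. ring.
Qed.

Lemma is_rpoly_rothe t c n : is_rpoly n (fun r => rothe t (c + r) n).
Proof.
  destruct n as [|m]; [apply (is_rpoly_const 0 1)|].
  apply is_rpoly_ext with
    (fun r => / INR (fact (S m)) * ((r + c) * rising ((t * INR (S m) + c - INR m) + r) m)).
  - apply is_rpoly_scal, is_rpoly_mul_lin, is_rpoly_rising.
  - intros r. unfold rothe.
    replace (t * INR (S m) + c - INR m + r) with (t * INR (S m) + (c + r) - INR m) by ring.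
    unfold Rdiv. ring.
Qed.

Definition conv (c d : nat -> R) (n : nat) : R := sum_f_R0 (fun k => c k * d (n - k)%nat) n.

Lemma conv_rothe_shift t s m :
  (forall r s, conv (rothe t r) (rothe t s) m = rothe t (r + s) m) ->
  forall r, conv (rothe t r) (rothe t s) (S m) - rothe t (r + s) (S m)
          = conv (rothe t (r - 1)) (rothe t s) (S m) - rothe t (r - 1 + s) (S m).
Proof.
  intros IH r. unfold conv.
  assert (Split : forall r0, sum_f_R0 (fun k => rothe t r0 k * rothe t s (S m - k)) (S m)
            = rothe t s (S m) + sum_f_R0 (fun k => rothe t r0 (S k) * rothe t s (m - k)) m).
  { intros r0. rewrite decomp_sum by lia.
    replace (S m - 0)%nat with (S m) by lia. simpl (rothe t r0 0).
    rewrite Rmult_1_l. reflexivity. }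
  assert (Hsum : sum_f_R0 (fun k => rothe t r (S k) * rothe t s (m - k)) m
               - sum_f_R0 (fun k => rothe t (r - 1) (S k) * rothe t s (m - k)) m
               = rothe t (r - 1 + t + s) m).
  { rewrite <- minus_sum, <- IH. apply sum_eq. intros k _.
    rewrite <- rothe_succ_sub1. ring. }
  pose proof (rothe_succ_sub1 t (r + s) m) as Hrs.
  replace (r + s - 1 + t) with (r - 1 + t + s) in Hrs by ring.
  replace (r - 1 + s) with (r + s - 1) by ring.
  rewrite !Split. lra.
Qed.

(* Hagen-Rothe identity. Both sides are polynomials in [r] of degree [n]; their
   difference is 1-periodic in [r] and vanishes at [r = 0], hence at every natural
   number. *)
Theorem rothe_conv t n r s : conv (rothe t r) (rothe t s) n = rothe t (r + s) n.
Proof.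
  revert r s. induction n as [|m IH]; intros r s; [unfold conv; simpl; ring|].
  set (D := fun r => conv (rothe t r) (rothe t s) (S m) - rothe t (r + s) (S m)).
  assert (HD0 : D 0 = 0).
  { unfold D, conv. rewrite decomp_sum by lia. simpl pred.
    rewrite (sum_eq _ (fun _ => 0)).
    - rewrite sum_cte. replace (S m - 0)%nat with (S m) by lia.
      rewrite Rplus_0_l. simpl (rothe t 0 0). ring.
    - intros i _. rewrite rothe_0_l. simpl. ring. }
  assert (HDnat : forall k, D (INR k) = 0).
  { induction k as [|k IHk]; [exact HD0|].
    unfold D. rewrite conv_rothe_shift by exact IH.
    rewrite S_INR. replace (INR k + 1 - 1) with (INR k) by ring. exact IHk. }
  assert (HDpoly : is_rpoly (S m) D).
  { apply is_rpoly_ext with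
      (fun r => sum_f_R0 (fun k => rothe t s (S m - k) * rothe t (0 + r) k) (S m)
                + (-1) * rothe t (s + r) (S m)).
    - apply is_rpoly_plus; [|apply is_rpoly_scal, is_rpoly_rothe].
      apply is_rpoly_sum. intros k Hk.
      apply is_rpoly_scal, is_rpoly_le with k; auto using is_rpoly_rothe.
    - intros x. unfold D, conv. rewrite Rplus_0_l, (Rplus_comm s x).
      rewrite (sum_eq _ (fun k => rothe t x k * rothe t s (S m - k))) by (intros; ring).
      ring. }
  pose proof (is_rpoly_eq_0 (S m) D HDpoly (fun k _ => HDnat k) r) as H.
  unfold D in H. lra.
Qed.

(** * Complex power series with real coefficients *)

Lemma fst_sum_n (a : nat -> C) n : fst (sum_n a n) = sum_n (fun k => fst (a k)) n.
Proof. induction n as [|n IH]; [rewrite !sum_O | rewrite !sum_Sn; simpl; rewrite <- IH]; reflexivity. Qed.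

Lemma snd_sum_n (a : nat -> C) n : snd (sum_n a n) = sum_n (fun k => snd (a k)) n.
Proof. induction n as [|n IH]; [rewrite !sum_O | rewrite !sum_Sn; simpl; rewrite <- IH]; reflexivity. Qed.

Lemma is_series_C (a : nat -> C) (l : C) :
  @is_series C_AbsRing C_NormedModule a l <->
  is_series (fun n => fst (a n)) (fst l) /\ is_series (fun n => snd (a n)) (snd l).
Proof.
  unfold is_series.
  rewrite (@filterlim_locally nat C_NormedModule eventually _ (sum_n a) l),
    !(@filterlim_locally nat R_NormedModule eventually _ _ _).
  split.
  - intros H. split; intros eps; generalize (H eps); apply filter_imp; intros n [H1 H2];
      [rewrite <- fst_sum_n | rewrite <- snd_sum_n]; auto.
  - intros [H1 H2] eps. generalize (filter_and _ _ (H1 eps) (H2 eps)). apply filter_imp.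
    intros n [Ha Hb]. split; [rewrite fst_sum_n | rewrite snd_sum_n]; auto.
Qed.

Lemma CSeries_unique (a : nat -> C) l :
  @is_series C_AbsRing C_NormedModule a l -> CSeries a = l.
Proof.
  intros [H1 H2]%is_series_C. unfold CSeries.
  rewrite (is_series_unique _ _ H1), (is_series_unique _ _ H2). destruct l; auto.
Qed.

Lemma CSeries_correct (a : nat -> C) :
  @ex_series C_AbsRing C_NormedModule a -> @is_series C_AbsRing C_NormedModule a (CSeries a).
Proof. intros [l Hl]. rewrite (CSeries_unique _ _ Hl). exact Hl. Qed.

Lemma sum_n_RtoC_mult (f : nat -> R) (w : C) N :
  sum_n (fun k => RtoC (f k) * w)%C N = (RtoC (sum_f_R0 f N) * w)%C.
Proof.
  induction N as [|N IH]; [rewrite sum_O; reflexivity|].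
  rewrite sum_Sn, IH. simpl sum_f_R0. rewrite RtoC_plus.
  symmetry. apply Cmult_plus_distr_r.
Qed.

Lemma is_series_Cmult (a b : nat -> C) la lb :
  @is_series C_AbsRing C_NormedModule a la -> @is_series C_AbsRing C_NormedModule b lb ->
  ex_series (fun n => Cmod (a n)) -> ex_series (fun n => Cmod (b n)) ->
  @is_series C_AbsRing C_NormedModule (fun n => sum_n (fun k => a k * b (n - k)%nat)%C n) (la * lb)%C.
Proof.
  intros [Ha1 Ha2]%is_series_C [Hb1 Hb2]%is_series_C Ha Hb.
  assert (Abs : forall (e : nat -> C) (f : C -> R), ex_series (fun n => Cmod (e n)) ->
            (forall z, Rabs (f z) <= Cmod z) -> ex_series (fun n => Rabs (f (e n)))).
  { intros e f He Hf.
    apply (@ex_series_le R_AbsRing R_CompleteNormedModule _ (fun n => Cmod (e n))); [|exact He].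
    intros n. change (Rabs (Rabs (f (e n))) <= Cmod (e n)). rewrite Rabs_Rabsolu. apply Hf. }
  assert (Hfst : forall z : C, Rabs (fst z) <= Cmod z)
    by (intros z; eapply Rle_trans; [apply Rmax_l | apply Rmax_Cmod]).
  assert (Hsnd : forall z : C, Rabs (snd z) <= Cmod z)
    by (intros z; eapply Rle_trans; [apply Rmax_r | apply Rmax_Cmod]).
  pose proof (Abs a fst Ha Hfst). pose proof (Abs a snd Ha Hsnd).
  pose proof (Abs b fst Hb Hfst). pose proof (Abs b snd Hb Hsnd).
  apply is_series_C. split.
  - pose proof (is_series_minus _ _ _ _ (is_series_mult _ _ _ _ Ha1 Hb1 ltac:(auto) ltac:(auto))
                                       (is_series_mult _ _ _ _ Ha2 Hb2 ltac:(auto) ltac:(auto))) as Hm.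
    revert Hm. apply is_series_ext. intros n.
    rewrite fst_sum_n, sum_n_Reals. unfold minus, plus, opp. simpl.
    rewrite minus_sum. ring.
  - pose proof (is_series_plus _ _ _ _ (is_series_mult _ _ _ _ Ha1 Hb2 ltac:(auto) ltac:(auto))
                                      (is_series_mult _ _ _ _ Ha2 Hb1 ltac:(auto) ltac:(auto))) as Hm.
    revert Hm. apply is_series_ext. intros n.
    rewrite snd_sum_n, sum_n_Reals. unfold plus. simpl.
    rewrite <- plus_sum. apply sum_eq. intros k _. ring.
Qed.

Lemma is_series_finite {K : AbsRing} {V : NormedModule K} (a : nat -> V) N :
  (forall n, (N < n)%nat -> a n = zero) -> is_series a (sum_n a N).
Proof.
  intros H. apply filterlim_ext_loc with (fun _ => sum_n a N); [|apply filterlim_const].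
  exists N. intros n Hn. induction Hn as [|n Hn IH]; auto.
  rewrite sum_Sn, H, plus_zero_r by lia. auto.
Qed.

Definition cterm (c : nat -> R) (x : C) (n : nat) : C := (RtoC (c n) * Cpow x n)%C.
Definition cseries (c : nat -> R) (x : C) : C := CSeries (cterm c x).
Definition abs_conv (c : nat -> R) (s : R) : Prop := ex_series (fun n => Rabs (c n) * s ^ n).

Lemma Cmod_cterm c x n : Cmod (cterm c x n) = Rabs (c n) * Cmod x ^ n.
Proof. unfold cterm. rewrite Cmod_mult, Cmod_pow, Cmod_R. auto. Qed.

Lemma ex_series_cterm c x :
  abs_conv c (Cmod x) -> @ex_series C_AbsRing C_NormedModule (cterm c x).
Proof.
  intros H.
  apply (@ex_series_le C_AbsRing C_CompleteNormedModule _ (fun n => Rabs (c n) * Cmod x ^ n));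
    [|exact H].
  intros n. change (Cmod (cterm c x n) <= Rabs (c n) * Cmod x ^ n). rewrite Cmod_cterm. lra.
Qed.

Lemma is_series_cseries c x :
  abs_conv c (Cmod x) -> @is_series C_AbsRing C_NormedModule (cterm c x) (cseries c x).
Proof. intros H. apply CSeries_correct, ex_series_cterm, H. Qed.

Lemma cseries_ext c d x : (forall n, c n = d n) -> cseries c x = cseries d x.
Proof.
  intros H. unfold cseries, CSeries, cterm.
  f_equal; apply Series_ext; intros n; rewrite H; auto.
Qed.

Lemma abs_conv_ext c d s : (forall n, c n = d n) -> abs_conv c s -> abs_conv d s.
Proof. intros H. apply ex_series_ext. intros n. rewrite H. auto. Qed.

Lemma abs_conv_finite c s N : (forall n, (N < n)%nat -> c n = 0) -> abs_conv c s.
Proof.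
  intros H. eexists. apply is_series_finite. intros n Hn.
  rewrite H, Rabs_R0, Rmult_0_l by exact Hn. reflexivity.
Qed.

Lemma cseries_finite c x N :
  (forall n, (N < n)%nat -> c n = 0) -> cseries c x = sum_n (cterm c x) N.
Proof.
  intros H. apply CSeries_unique, (@is_series_finite C_AbsRing C_NormedModule). intros n Hn.
  unfold cterm. rewrite H by exact Hn. apply Cmult_0_l.
Qed.

Lemma abs_conv_conv c d s : 0 <= s -> abs_conv c s -> abs_conv d s -> abs_conv (conv c d) s.
Proof.
  intros Hs [lc Hc] [ld Hd].
  pose proof (is_series_mult_pos _ _ _ _ Hc Hd
    (fun n => Rmult_le_pos _ _ (Rabs_pos _) (pow_le _ _ Hs))
    (fun n => Rmult_le_pos _ _ (Rabs_pos _) (pow_le _ _ Hs))) as Hm.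
  apply (@ex_series_le R_AbsRing R_CompleteNormedModule _
    (fun n => sum_f_R0 (fun k => Rabs (c k) * s ^ k * (Rabs (d (n - k)%nat) * s ^ (n - k))) n));
    [|eexists; exact Hm].
  intros n. change (Rabs (Rabs (conv c d n) * s ^ n) <=
    sum_f_R0 (fun k => Rabs (c k) * s ^ k * (Rabs (d (n - k)%nat) * s ^ (n - k))) n).
  rewrite Rabs_pos_eq by (apply Rmult_le_pos; [apply Rabs_pos | apply pow_le; auto]).
  unfold conv. eapply Rle_trans.
  - apply Rmult_le_compat_r; [apply pow_le; auto | apply sum_f_R0_triangle].
  - rewrite Rmult_comm, scal_sum. apply Req_le, sum_eq. intros k Hk.
    rewrite Rabs_mult. replace (s ^ n) with (s ^ k * s ^ (n - k)) by (rewrite <- pow_add; f_equal; lia).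
    ring.
Qed.

Lemma cseries_conv c d x : abs_conv c (Cmod x) -> abs_conv d (Cmod x) ->
  cseries (conv c d) x = (cseries c x * cseries d x)%C.
Proof.
  intros Hc Hd. apply CSeries_unique.
  assert (Habs : forall e, abs_conv e (Cmod x) -> ex_series (fun n => Cmod (cterm e x n))).
  { intros e He. revert He. apply ex_series_ext. intros n. rewrite Cmod_cterm. auto. }
  pose proof (is_series_Cmult _ _ _ _ (is_series_cseries c x Hc) (is_series_cseries d x Hd)
    (Habs c Hc) (Habs d Hd)) as H.
  revert H. apply is_series_ext. intros n. unfold cterm at 3, conv.
  rewrite <- sum_n_RtoC_mult. apply sum_n_ext_loc. intros k Hk. unfold cterm.
  replace (Cpow x n) with (Cpow x k * Cpow x (n - k))%C
    by (rewrite <- Cpow_add_r; f_equal; lia).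
  rewrite RtoC_mult. match goal with |- ?u = ?v => change (@eq C u v) end. ring.
Qed.

Lemma cseries_shift c d x : abs_conv d (Cmod x) -> c 0%nat = 1 -> (forall n, c (S n) = d n) ->
  cseries c x = (1 + x * cseries d x)%C.
Proof.
  intros Hd H0 HS. apply CSeries_unique, is_series_decr_1.
  pose proof (@is_series_scal C_AbsRing C_NormedModule x _ _ (is_series_cseries d x Hd)) as H.
  eapply is_series_ext in H.
  - match goal with |- is_series _ ?l => replace l with (scal x (cseries d x)) end; [exact H|].
    unfold cterm. rewrite H0. change (x * cseries d x = 1 + x * cseries d x - 1 * 1)%C. ring.
  - intros n. unfold cterm. rewrite HS.
    change (x * (RtoC (d n) * Cpow x n) = RtoC (d n) * (x * Cpow x n))%C. ring.
Qed.

Lemma cseries_minus c d x : abs_conv c (Cmod x) -> abs_conv d (Cmod x) ->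
  cseries (fun n => c n - d n) x = (cseries c x - cseries d x)%C.
Proof.
  intros Hc Hd. apply CSeries_unique.
  pose proof (is_series_minus _ _ _ _ (is_series_cseries c x Hc) (is_series_cseries d x Hd)) as H.
  revert H. apply is_series_ext. intros n. unfold cterm, minus, plus, opp. simpl.
  change (RtoC (c n) * Cpow x n + - (RtoC (d n) * Cpow x n) = RtoC (c n - d n) * Cpow x n)%C.
  rewrite RtoC_minus. ring.
Qed.

Lemma cseries_RtoC c s : cseries c (RtoC s) = RtoC (Series (fun n => c n * s ^ n)).
Proof.
  unfold cseries, CSeries, cterm. apply injective_projections; simpl.
  - apply Series_ext. intros n. rewrite <- RtoC_pow. simpl. ring.
  - rewrite (Series_ext _ (fun _ => 0 * 0)), Series_scal_l; [ring|].
    intros n. rewrite <- RtoC_pow. simpl. ring.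
Qed.

Lemma Cmod_cseries_le c x :
  abs_conv c (Cmod x) -> Cmod (cseries c x) <= Series (fun n => Rabs (c n) * Cmod x ^ n).
Proof.
  intros Hc.
  assert (Hpart : forall N, Cmod (sum_n (cterm c x) N) <= sum_n (fun n => Rabs (c n) * Cmod x ^ n) N).
  { induction N as [|N IH]; rewrite !sum_O || rewrite !sum_Sn.
    - rewrite Cmod_cterm. lra.
    - eapply Rle_trans; [apply (Cmod_triangle (sum_n (cterm c x) N))|].
      rewrite Cmod_cterm. change (plus ?u ?v) with (u + v). lra. }
  apply (is_lim_seq_le _ _ (Cmod (cseries c x)) (Series (fun n => Rabs (c n) * Cmod x ^ n)) Hpart).
  - eapply filterlim_comp; [apply is_series_cseries, Hc | apply (@filterlim_norm C_AbsRing C_NormedModule)].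
  - apply Series_correct, Hc.
Qed.

(** * Functional equations *)

Lemma abs_conv_rothe_0 t s : abs_conv (rothe t 0) s.
Proof. apply abs_conv_finite with 0%nat. intros [|n] Hn; [lia | apply rothe_0_l]. Qed.

Lemma cseries_rothe_0 t x : cseries (rothe t 0) x = 1%C.
Proof.
  rewrite (cseries_finite _ _ 0) by (intros [|n] Hn; [lia | apply rothe_0_l]).
  rewrite sum_O. unfold cterm. simpl. apply injective_projections; simpl; ring.
Qed.

Lemma cseries_rothe_pow t r x k : abs_conv (rothe t r) (Cmod x) ->
  abs_conv (rothe t (INR k * r)) (Cmod x) /\
  cseries (rothe t (INR k * r)) x = Cpow (cseries (rothe t r) x) k.
Proof.
  intros Hr. induction k as [|k [IH1 IH2]].
  - simpl. rewrite Rmult_0_l. split; [apply abs_conv_rothe_0 | apply cseries_rothe_0].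
  - assert (E : forall n, conv (rothe t (INR k * r)) (rothe t r) n = rothe t (INR (S k) * r) n)
      by (intros n; rewrite rothe_conv, S_INR; f_equal; ring).
    split.
    + apply abs_conv_ext with (1 := E), abs_conv_conv; auto using Cmod_ge_0.
    + rewrite <- (cseries_ext _ _ _ E), cseries_conv, IH2 by auto. simpl. ring.
Qed.

Lemma rothe_1_succ t n : rothe t 1 (S n) = rothe t t n.
Proof.
  pose proof (rothe_succ_sub1 t 1 n) as H.
  replace (1 - 1) with 0 in H by ring. replace (0 + t) with t in H by ring.
  rewrite rothe_0_l in H. cbn -[rothe] in H. lra.
Qed.

Definition fuss (h : nat) : nat -> R := rothe (INR h + 1) 1.

(* [B^(h+1)] is [B] with its coefficients shifted by one ([rothe_1_succ]). *)
Lemma cseries_fuss_eq h x : abs_conv (fuss h) (Cmod x) ->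
  cseries (fuss h) x = (1 + x * Cpow (cseries (fuss h) x) (h + 1))%C.
Proof.
  unfold fuss. replace (INR h + 1) with (INR (h + 1)) by (rewrite plus_INR; reflexivity).
  intros Hc. destruct (cseries_rothe_pow (INR (h + 1)) 1 x (h + 1) Hc) as [H1 H2].
  rewrite Rmult_1_r in H1, H2. rewrite <- H2.
  apply cseries_shift; auto using rothe_1_succ.
Qed.

Definition branch_coef (h : nat) : nat -> R := rothe ((INR h + 1) / INR h) (- (1 / INR h)).

(* With [t = (h+1)/h] and [r = -1/h]: [g^(h+1)] has exponent [(h+1) r = r - 1] and
   [r - 1 + t = 0], so by [rothe_succ_sub1] the coefficients of [g - g^(h+1)] are those of [x]. *)
Lemma cseries_branch_coef_eq h x : (0 < h)%nat -> abs_conv (branch_coef h) (Cmod x) ->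
  (cseries (branch_coef h) x - Cpow (cseries (branch_coef h) x) (S h))%C = x.
Proof.
  intros Hh Hc. unfold branch_coef in *. set (t := (INR h + 1) / INR h) in *. set (r := - (1 / INR h)) in *.
  assert (HX : 0 < INR h) by (apply lt_0_INR; lia).
  assert (Hcoef : forall n, rothe t r n - rothe t (INR (S h) * r) n = if Nat.eqb n 1 then 1 else 0).
  { intros [|n]; [simpl; ring|].
    replace (INR (S h) * r) with (r - 1) by (unfold r; rewrite S_INR; field; lra).
    rewrite rothe_succ_sub1. replace (r - 1 + t) with 0 by (unfold r, t; field; lra).
    rewrite rothe_0_l. destruct n; reflexivity. }
  destruct (cseries_rothe_pow t r x (S h) Hc) as [H1 H2].
  rewrite <- H2, <- cseries_minus by auto.
  rewrite (cseries_finite _ _ 1) by (intros [|[|n]] Hn; [lia | lia | apply Hcoef]).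
  rewrite sum_Sn, sum_O. unfold cterm. rewrite !Hcoef. simpl.
  change (plus ?u ?v) with (Cplus u v). apply injective_projections; simpl; ring.
Qed.

(** * Powers of [zeta] *)

Lemma Cpow_cos_sin (a : R) n : Cpow (cos a, sin a) n = (cos (INR n * a), sin (INR n * a)).
Proof.
  induction n as [|n IH].
  - simpl. rewrite Rmult_0_l, cos_0, sin_0. reflexivity.
  - rewrite Cpow_S, IH, S_INR.
    replace ((INR n + 1) * a) with (a + INR n * a) by ring.
    rewrite cos_plus, sin_plus. apply injective_projections; simpl; ring.
Qed.

Lemma Cmod_cos_sin a : Cmod (cos a, sin a) = 1.
Proof.
  unfold Cmod. rewrite <- sqrt_1. f_equal. simpl.
  pose proof (sin2_cos2 a) as H. unfold Rsqr in H. lra.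
Qed.

Lemma zeta_pow_self h : (0 < h)%nat -> Cpow (zeta h) h = 1%C.
Proof.
  intros H. unfold zeta. rewrite Cpow_cos_sin.
  replace (INR h * (2 * PI / INR h)) with (2 * PI) by (field; apply not_0_INR; lia).
  rewrite cos_2PI, sin_2PI. reflexivity.
Qed.

Lemma Cmod_zeta_pow h j : Cmod (Cpow (zeta h) j) = 1.
Proof. unfold zeta. rewrite Cpow_cos_sin. apply Cmod_cos_sin. Qed.

Lemma zeta_pow_neq_0 h j : Cpow (zeta h) j <> 0%C.
Proof. intros E. pose proof (Cmod_zeta_pow h j) as H. rewrite E, Cmod_0 in H. lra. Qed.

Lemma sin_ge_cubic x : 0 <= x <= 2 -> x - x ^ 3 / 6 <= sin x.
Proof.
  intros Hx. pose proof PI2_3_2.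
  destruct (SIN x) as [Hs _]; try lra.
  replace (sin_lb x) with (x - x ^ 3 / 6 + x ^ 5 * (1 / 120 - x * x / 5040)) in Hs
    by (unfold sin_lb, sin_approx, sin_term; simpl; field).
  assert (0 <= x ^ 5) by (apply pow_le; lra).
  assert (0 <= x ^ 5 * (1 / 120 - x * x / 5040)) by (apply Rmult_le_pos; nra).
  lra.
Qed.

Lemma sin_PI_div_gt h : (2 <= h)%nat -> 1 / INR h < sin (PI / INR h).
Proof.
  intros Hh. assert (H2 : 2 <= INR h) by (apply (le_INR 2); lia).
  pose proof PI2_3_2. pose proof PI_4.
  assert (Hx : 0 <= PI / INR h <= 2).
  { split; [apply Rdiv_le_0_compat; lra|].
    apply Rmult_le_reg_r with (INR h); [lra|]. unfold Rdiv. rewrite Rmult_assoc, Rinv_l; lra. }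
  eapply Rlt_le_trans; [|apply sin_ge_cubic; auto].
  replace (PI / INR h - (PI / INR h) ^ 3 / 6) with ((PI - PI ^ 3 / (6 * INR h ^ 2)) / INR h)
    by (field; lra).
  apply Rmult_lt_compat_r; [apply Rinv_0_lt_compat; lra|].
  assert (PI ^ 3 / (6 * INR h ^ 2) <= PI ^ 3 / 24).
  { unfold Rdiv. apply Rmult_le_compat_l; [apply pow_le; lra|].
    apply Rinv_le_contravar; [lra | simpl; nra]. }
  assert (PI ^ 3 <= 16 * PI) by (simpl; nra).
  lra.
Qed.

Lemma cos_mul_le h m : (2 <= h)%nat -> (1 <= m < h)%nat ->
  cos (INR m * (2 * PI / INR h)) <= cos (2 * PI / INR h).
Proof.
  intros Hh Hm. pose proof PI_RGT_0.
  assert (H2 : 2 <= INR h) by (apply (le_INR 2); lia).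
  assert (Hm1 : 1 <= INR m) by (apply (le_INR 1); lia).
  assert (Hmh : INR m + 1 <= INR h) by (rewrite <- S_INR; apply le_INR; lia).
  set (a := 2 * PI / INR h).
  assert (Ha : 0 < a <= PI).
  { unfold a. split; [apply Rdiv_lt_0_compat; lra|].
    apply Rmult_le_reg_r with (INR h); [lra|]. unfold Rdiv. rewrite Rmult_assoc, Rinv_l; nra. }
  assert (Hma : INR m * a <= 2 * PI - a).
  { unfold a. apply Rmult_le_reg_r with (INR h); [lra|]. unfold Rdiv.
    replace (INR m * (2 * PI * / INR h) * INR h) with (INR m * (2 * PI)) by (field; lra).
    replace ((2 * PI - 2 * PI * / INR h) * INR h) with ((INR h - 1) * (2 * PI)) by (field; lra).
    apply Rmult_le_compat_r; lra. }
  destruct (Rle_lt_dec (INR m * a) PI).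
  - apply cos_decr_1; nra.
  - replace (cos (INR m * a)) with (cos (2 * PI - INR m * a))
      by (rewrite cos_minus, cos_2PI, sin_2PI; ring).
    apply cos_decr_1; lra.
Qed.

(* [|zeta^m - 1|^2 = 2 - 2 cos(2 pi m / h) >= 2 - 2 cos(2 pi / h) = 4 sin(pi / h)^2 > 4 / h^2]. *)
Lemma Cmod_zeta_pow_sub_1 h m : (2 <= h)%nat -> (1 <= m < h)%nat ->
  2 / INR h < Cmod (Cpow (zeta h) m - 1).
Proof.
  intros Hh Hm. assert (H2 : 2 <= INR h) by (apply (le_INR 2); lia).
  unfold zeta. rewrite Cpow_cos_sin.
  set (th := INR m * (2 * PI / INR h)).
  pose proof (cos_mul_le h m Hh Hm) as Hc. fold th in Hc.
  pose proof (sin_PI_div_gt h Hh) as Hs.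
  assert (Hcs : cos (2 * PI / INR h) = 1 - 2 * sin (PI / INR h) * sin (PI / INR h))
    by (rewrite <- cos_2a_sin; f_equal; field; lra).
  assert (E : Cmod ((cos th, sin th) - 1)%C = sqrt (2 - 2 * cos th)).
  { unfold Cmod. f_equal. simpl. pose proof (sin2_cos2 th) as Hss. unfold Rsqr in Hss. nra. }
  rewrite E, <- (sqrt_pow2 (2 / INR h)) by (apply Rdiv_le_0_compat; lra).
  apply sqrt_lt_1; [apply pow2_ge_0 | pose proof (COS_bound th); lra |].
  assert (0 < 1 / INR h) by (apply Rdiv_lt_0_compat; lra).
  replace ((2 / INR h) ^ 2) with (4 * (1 / INR h) * (1 / INR h)) by (simpl; field; lra).
  nra.
Qed.

(** * Growth of the coefficients *)

Lemma ex_series_ratio_le (d : nat -> R) q : 0 <= q < 1 -> (forall n, 0 <= d n) ->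
  (forall n, d (S (S n)) <= q * d (S n)) ->
  ex_series d /\ Series d <= d 0%nat + d 1%nat / (1 - q).
Proof.
  intros Hq Hd Hr.
  assert (Hgeom : forall n, d (S n) <= d 1%nat * q ^ n).
  { induction n as [|n IH]; simpl; [lra|].
    apply Rle_trans with (q * d (S n)); auto. nra. }
  assert (G : is_series (fun n => d 1%nat * q ^ n) (d 1%nat * / (1 - q))).
  { apply (@is_series_scal_l R_AbsRing R_NormedModule), is_series_geom. rewrite Rabs_pos_eq; lra. }
  assert (Htail : ex_series (fun n => d (S n))).
  { apply (@ex_series_le R_AbsRing R_CompleteNormedModule _ (fun n => d 1%nat * q ^ n));
      [|eexists; exact G].
    intros n. change (Rabs (d (S n)) <= d 1%nat * q ^ n). rewrite Rabs_pos_eq; auto. }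
  assert (Hex : ex_series d) by (apply ex_series_incr_1; auto).
  split; auto.
  rewrite Series_incr_1 by auto. apply Rplus_le_compat_l.
  apply Rle_trans with (Series (fun n => d 1%nat * q ^ n)).
  - apply Series_le; [intros n; split; auto | eexists; exact G].
  - rewrite (is_series_unique _ _ G). apply Req_le. reflexivity.
Qed.

Lemma pow_le_reg a b n : 0 <= a -> 0 <= b -> (0 < n)%nat -> a ^ n <= b ^ n -> a <= b.
Proof.
  intros Ha Hb Hn H. destruct (Rle_lt_dec a b) as [|Hlt]; auto.
  assert (Hlt' : forall m, b ^ S m < a ^ S m).
  { induction m as [|m IH]; [simpl; lra|].
    change (b * b ^ S m < a * a ^ S m). pose proof (pow_le b (S m) Hb). nra. }
  destruct n as [|n]; [lia|]. specialize (Hlt' n). lra.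
Qed.

(* [growth h] bounds the ratio of consecutive [fuss h] numbers and of the [h]-th powers of
   consecutive [|branch_coef h|]; it is the inverse radius of convergence of [B_{h+1}]. *)
Definition growth (h : nat) : R := (INR h + 1) ^ (h + 1) / INR h ^ h.

Lemma growth_pos h : (1 <= h)%nat -> 0 < growth h.
Proof.
  intros Hh. assert (1 <= INR h) by (apply (le_INR 1); lia).
  unfold growth. apply Rdiv_lt_0_compat; apply pow_lt; lra.
Qed.

Lemma growth_step_ineq k : (2 <= k)%nat ->
  (INR k + 2) ^ (k + 2) * INR k ^ k <= 2 * ((INR k + 1) ^ (k + 1) * (INR k + 1) ^ (k + 1)).
Proof.
  intros Hk. assert (Hx : 2 <= INR k) by (apply (le_INR 2); lia). set (x := INR k) in *.
  assert (H1 : ((x + 2) * x) ^ (k + 1) <= ((x + 1) * (x + 1)) ^ (k + 1)) by (apply pow_incr; nra).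
  rewrite !Rpow_mult_distr in H1.
  assert (E : (x + 2) ^ (k + 2) * x ^ k * x = (x + 2) ^ (k + 1) * x ^ (k + 1) * (x + 2)).
  { replace (k + 2)%nat with (S (k + 1)) by lia. replace (k + 1)%nat with (S k) by lia. simpl. ring. }
  assert (0 < x ^ (k + 1)) by (apply pow_lt; lra).
  assert (0 <= (x + 1) ^ (k + 1) * (x + 1) ^ (k + 1)) by (apply Rmult_le_pos; apply pow_le; lra).
  apply Rmult_le_reg_r with x; [lra|]. rewrite E.
  apply Rle_trans with ((x + 1) ^ (k + 1) * (x + 1) ^ (k + 1) * (x + 2)); nra.
Qed.

Lemma growth_ineq k : (2 <= k)%nat -> 32 * (INR k + 1) ^ (k + 1) <= 27 * 2 ^ (k + 1) * INR k ^ k.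
Proof.
  induction 1 as [|k Hk IH]; [simpl; lra|].
  rewrite S_INR. assert (Hx : 2 <= INR k) by (apply (le_INR 2); lia).
  pose proof (growth_step_ineq k Hk) as St. set (x := INR k) in *.
  replace (x + 1 + 1) with (x + 2) by ring.
  assert (0 < x ^ k) by (apply pow_lt; lra).
  assert (0 < (x + 1) ^ (k + 1)) by (apply pow_lt; lra).
  replace (S k + 1)%nat with (k + 2)%nat by lia. replace (S k) with (k + 1)%nat by lia.
  replace (2 ^ (k + 2)) with (2 * 2 ^ (k + 1))
    by (replace (k + 2)%nat with (S (k + 1)) by lia; simpl; ring).
  apply Rmult_le_reg_r with (x ^ k); auto.
  apply Rle_trans with (64 * ((x + 1) ^ (k + 1) * (x + 1) ^ (k + 1))); nra.
Qed.

Lemma growth_div_pow2_le h : (2 <= h)%nat -> growth h / 2 ^ (h + 1) <= 27 / 32.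
Proof.
  intros Hh. pose proof (growth_ineq h Hh).
  assert (2 <= INR h) by (apply (le_INR 2); lia).
  assert (0 < INR h ^ h) by (apply pow_lt; lra).
  assert (0 < 2 ^ (h + 1)) by (apply pow_lt; lra).
  unfold growth. apply Rmult_le_reg_r with (INR h ^ h * 2 ^ (h + 1)); [nra|].
  replace ((INR h + 1) ^ (h + 1) / INR h ^ h / 2 ^ (h + 1) * (INR h ^ h * 2 ^ (h + 1)))
    with ((INR h + 1) ^ (h + 1)) by (field; lra).
  lra.
Qed.

Lemma fuss_nonneg h n : 0 <= fuss h n.
Proof.
  destruct n as [|m]; unfold fuss, rothe; [lra|].
  pose proof (pos_INR h). pose proof (pos_INR m). pose proof (INR_fact_pos (S m)).
  assert (0 < rising ((INR h + 1) * INR (S m) + 1 - INR m) m) by (apply rising_pos; rewrite S_INR; nra).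
  apply Rdiv_le_0_compat; lra.
Qed.

Lemma fuss_ratio h m : (1 <= h)%nat -> fuss h (S (S m)) <= growth h * fuss h (S m).
Proof.
  intros Hh. unfold fuss, rothe, growth.
  set (X := INR h). set (M := INR m).
  assert (HX : 1 <= X) by (apply (le_INR 1); lia).
  assert (HM : 0 <= M) by apply pos_INR.
  set (lo := (X + 1) * INR (S m) + 1 - M).
  assert (Elo : lo = X * M + X + 2) by (unfold lo; rewrite S_INR; fold M; ring).
  replace ((X + 1) * INR (S (S m)) + 1 - INR (S m)) with (lo + X) by (rewrite Elo, !S_INR; fold M; ring).
  assert (Key : rising (lo + X) (S m) * rising lo h = rising lo m * rising (lo + M) (S h)).
  { rewrite Rmult_comm. unfold X. rewrite <- rising_add.
    replace (h + S m)%nat with (m + S h)%nat by lia. rewrite rising_add. reflexivity. }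
  assert (Hlast : rising (lo + M) (S h) = rising (lo + M) h * ((X + 1) * (M + 2)))
    by (change (rising (lo + M) (S h)) with (rising (lo + M) h * (lo + M + X)); rewrite Elo; ring).
  assert (Cmp : X ^ h * rising (lo + M) h <= (X + 1) ^ h * rising lo h).
  { apply scaled_rising_le. intros i Hi. pose proof (pos_INR i). rewrite Elo. nra. }
  assert (P1 : 0 < rising lo m) by (apply rising_pos; rewrite Elo; nra).
  assert (P2 : 0 < rising lo h) by (apply rising_pos; rewrite Elo; nra).
  pose proof (INR_fact_pos (S m)) as Hf.
  assert (0 < X ^ h) by (apply pow_lt; lra).
  change (fact (S (S m))) with (S (S m) * fact (S m))%nat. rewrite mult_INR.
  replace (INR (S (S m))) with (M + 2) by (rewrite !S_INR; fold M; ring).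
  set (F := INR (fact (S m))) in *.
  apply Rmult_le_reg_r with (rising lo h * X ^ h * ((M + 2) * F)); [apply Rmult_lt_0_compat; nra|].
  replace (1 * rising (lo + X) (S m) / ((M + 2) * F) * (rising lo h * X ^ h * ((M + 2) * F)))
    with (rising (lo + X) (S m) * rising lo h * X ^ h) by (field; lra).
  replace ((X + 1) ^ (h + 1) / X ^ h * (1 * rising lo m / F) * (rising lo h * X ^ h * ((M + 2) * F)))
    with ((rising lo m * ((X + 1) * (M + 2))) * ((X + 1) ^ h * rising lo h))
    by (rewrite Nat.add_1_r; simpl; field; lra).
  rewrite Key, Hlast.
  replace (rising lo m * (rising (lo + M) h * ((X + 1) * (M + 2))) * X ^ h)
    with ((rising lo m * ((X + 1) * (M + 2))) * (X ^ h * rising (lo + M) h)) by ring.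
  apply Rmult_le_compat_l; [apply Rmult_le_pos; nra | exact Cmp].
Qed.

Lemma Series_nonneg (a : nat -> R) : (forall n, 0 <= a n) -> ex_series a -> 0 <= Series a.
Proof.
  intros Ha Hex. replace 0 with (Series (fun _ => 0 * 0)) by (rewrite Series_scal_l; ring).
  apply Series_le; auto. intros n. rewrite Rmult_0_l. auto with real.
Qed.

Lemma fuss_series_bounds h : (2 <= h)%nat ->
  abs_conv (fuss h) (1 / 2 ^ (h + 1)) /\
  1 <= Series (fun n => fuss h n * (1 / 2 ^ (h + 1)) ^ n) <= 9 / 5.
Proof.
  intros Hh. set (y := 1 / 2 ^ (h + 1)).
  assert (Hy : 0 < y) by (apply Rdiv_lt_0_compat; [lra | apply pow_lt; lra]).
  assert (Hy8 : y <= 1 / 8).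
  { unfold y. apply Rmult_le_compat_l; [lra|]. apply Rinv_le_contravar; [lra|].
    replace 8 with (2 ^ 3) by (simpl; ring). apply Rle_pow; [lra | lia]. }
  set (q := growth h * y).
  assert (Hq : 0 <= q <= 27 / 32).
  { pose proof (growth_pos h ltac:(lia)). pose proof (growth_div_pow2_le h Hh).
    split; [unfold q; apply Rmult_le_pos; lra | unfold q, y, Rdiv in *; rewrite Rmult_1_l; lra]. }
  set (d := fun n => fuss h n * y ^ n).
  assert (Hd : forall n, 0 <= d n) by (intros n; apply Rmult_le_pos; [apply fuss_nonneg | apply pow_le; lra]).
  assert (Habs : forall n, Rabs (fuss h n) * y ^ n = d n) by (intros n; rewrite Rabs_pos_eq; auto using fuss_nonneg).
  assert (Hr : forall n, d (S (S n)) <= q * d (S n)).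
  { intros n. unfold d, q. change (y ^ S (S n)) with (y * y ^ S n).
    pose proof (pow_le y (S n) ltac:(lra)).
    replace (growth h * y * (fuss h (S n) * y ^ S n)) with (growth h * fuss h (S n) * (y * y ^ S n)) by ring.
    apply Rmult_le_compat_r; [apply Rmult_le_pos; lra | apply fuss_ratio; lia]. }
  destruct (ex_series_ratio_le d q ltac:(lra) Hd Hr) as [Hex Hbound].
  split; [apply ex_series_ext with d; auto|].
  assert (D0 : d 0%nat = 1) by (unfold d, fuss; simpl; ring).
  assert (D1 : d 1%nat = y) by (unfold d, fuss, rothe; simpl; field).
  change (1 <= Series d <= 9 / 5). split.
  - rewrite Series_incr_1, D0 by exact Hex.
    pose proof (Series_nonneg (fun k => d (S k)) (fun k => Hd (S k)) (proj1 (ex_series_incr_1 d) Hex)).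
    lra.
  - rewrite D0, D1 in Hbound. apply Rle_trans with (1 + y / (1 - q)); auto.
    apply Rle_trans with (1 + (1 / 8) / (5 / 32)); [apply Rplus_le_compat_l | lra].
    unfold Rdiv. apply Rmult_le_compat; try lra.
    + apply Rlt_le, Rinv_0_lt_compat. lra.
    + apply Rinv_le_contravar; lra.
Qed.

Lemma branch_coef_succ h m : (1 <= h)%nat ->
  branch_coef h (S m) = - (/ INR h * rising (1 + INR m / INR h) m / INR (fact (S m))).
Proof.
  intros Hh. assert (1 <= INR h) by (apply (le_INR 1); lia).
  unfold branch_coef, rothe.
  replace ((INR h + 1) / INR h * INR (S m) + - (1 / INR h) - INR m) with (1 + INR m / INR h)
    by (rewrite S_INR; field; lra).
  pose proof (INR_fact_pos (S m)). field. lra.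
Qed.

Lemma branch_coef_succ_nonpos h m : (1 <= h)%nat -> branch_coef h (S m) <= 0.
Proof.
  intros Hh. rewrite branch_coef_succ by auto.
  assert (1 <= INR h) by (apply (le_INR 1); lia).
  assert (0 <= INR m / INR h) by (apply Rdiv_le_0_compat; [apply pos_INR | lra]).
  pose proof (rising_pos (1 + INR m / INR h) m ltac:(lra)). pose proof (INR_fact_pos (S m)).
  assert (0 <= / INR h * rising (1 + INR m / INR h) m / INR (fact (S m))); [|lra].
  apply Rdiv_le_0_compat; [apply Rmult_le_pos; [apply Rlt_le, Rinv_0_lt_compat|]|]; lra.
Qed.

Lemma pow_ratio_le k a : INR k / 2 < a -> ((a + 1) / a) ^ k <= (a + INR k / 2) / (a - INR k / 2).
Proof.
  revert a. induction k as [|k IH]; intros a Ha.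
  - simpl in *. replace (a + 0 / 2) with (a - 0 / 2) by field. rewrite Rdiv_diag; lra.
  - rewrite S_INR in *. set (p := INR k / 2).
    assert (Hp : 0 <= p) by (apply Rdiv_le_0_compat; [apply pos_INR | lra]).
    replace ((INR k + 1) / 2) with (p + 1 / 2) in * by (unfold p; field).
    pose proof (IH a ltac:(unfold p in *; lra)) as IHa. fold p in IHa.
    change (((a + 1) / a) ^ S k) with ((a + 1) / a * ((a + 1) / a) ^ k).
    assert (0 <= (a + 1) / a) by (apply Rdiv_le_0_compat; lra).
    apply Rle_trans with ((a + 1) / a * ((a + p) / (a - p))); [apply Rmult_le_compat_l; auto|].
    assert (D : (a + (p + 1/2)) / (a - (p + 1/2)) - (a + 1) / a * ((a + p) / (a - p))
                = (a / 2 + p * p + p / 2) / ((a - (p + 1/2)) * (a - p) * a)) by (field; lra).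
    assert (0 <= (a / 2 + p * p + p / 2) / ((a - (p + 1/2)) * (a - p) * a)).
    { apply Rdiv_le_0_compat; [nra|]. apply Rmult_lt_0_compat; [apply Rmult_lt_0_compat|]; lra. }
    lra.
Qed.

Lemma rising_shift_pow_le_aux h L k : (1 <= h)%nat -> 1 <= L ->
  rising (L + 1 / INR h) k ^ h * (INR h * L - INR h / 2) <=
  rising L k ^ h * (INR h * L - INR h / 2 + INR h * INR k).
Proof.
  intros Hh HL. set (X := INR h). assert (HX : 1 <= X) by (apply (le_INR 1); lia).
  induction k as [|k IH]; [simpl; lra|].
  change (rising (L + 1 / X) (S k)) with (rising (L + 1 / X) k * (L + 1 / X + INR k)).
  change (rising L (S k)) with (rising L k * (L + INR k)).
  rewrite !Rpow_mult_distr.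
  set (a := X * (L + INR k)).
  pose proof (pos_INR k).
  assert (Ha : X / 2 < a) by (unfold a; nra).
  replace (L + 1 / X + INR k) with ((a + 1) / X) by (unfold a; field; lra).
  replace (L + INR k) with (a / X) by (unfold a; field; lra).
  replace (X * L - X / 2 + X * INR k) with (a - X / 2) in IH by (unfold a; ring).
  replace (X * L - X / 2 + X * INR (S k)) with (a + X / 2) by (unfold a; rewrite S_INR; field).
  assert (Hp1 : 0 <= rising (L + 1 / X) k ^ h).
  { apply pow_le, Rlt_le, rising_pos. pose proof (Rdiv_lt_0_compat 1 X ltac:(lra) ltac:(lra)). lra. }
  assert (Hp2 : 0 <= rising L k ^ h) by (apply pow_le, Rlt_le, rising_pos; lra).
  assert (Hq : 0 <= ((a + 1) / X) ^ h) by (apply pow_le, Rdiv_le_0_compat; lra).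
  assert (Key : ((a + 1) / X) ^ h * (a - X / 2) <= (a / X) ^ h * (a + X / 2)).
  { replace ((a + 1) / X) with ((a + 1) / a * (a / X)) by (field; lra).
    rewrite Rpow_mult_distr.
    assert (0 < (a / X) ^ h) by (apply pow_lt, Rdiv_lt_0_compat; lra).
    assert (((a + 1) / a) ^ h * (a - X / 2) <= a + X / 2).
    { pose proof (pow_ratio_le h a Ha) as Hr. fold X in Hr.
      apply Rmult_le_reg_r with (/ (a - X / 2)); [apply Rinv_0_lt_compat; lra|].
      rewrite Rmult_assoc, Rinv_r, Rmult_1_r by lra. exact Hr. }
    nra. }
  apply Rle_trans with (rising L k ^ h * (a - X / 2) * ((a + 1) / X) ^ h).
  - replace (rising (L + 1 / X) k ^ h * ((a + 1) / X) ^ h * (X * L - X / 2))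
      with ((rising (L + 1 / X) k ^ h * (X * L - X / 2)) * ((a + 1) / X) ^ h) by ring.
    apply Rmult_le_compat_r; auto.
  - replace (rising L k ^ h * (a - X / 2) * ((a + 1) / X) ^ h)
      with (rising L k ^ h * (((a + 1) / X) ^ h * (a - X / 2))) by ring.
    replace (rising L k ^ h * (a / X) ^ h * (a + X / 2))
      with (rising L k ^ h * ((a / X) ^ h * (a + X / 2))) by ring.
    apply Rmult_le_compat_l; auto.
Qed.

Lemma rising_shift_pow_le h m : (1 <= h)%nat ->
  rising (1 + INR m / INR h + 1 / INR h) m ^ h <= (INR h + 1) * rising (1 + INR m / INR h) m ^ h.
Proof.
  intros Hh. set (X := INR h). set (M := INR m).
  assert (HX : 1 <= X) by (apply (le_INR 1); lia). assert (HM : 0 <= M) by apply pos_INR.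
  assert (HL : 1 <= 1 + M / X) by (pose proof (Rdiv_le_0_compat M X HM ltac:(lra)); lra).
  pose proof (rising_shift_pow_le_aux h (1 + M / X) m Hh HL) as T. fold X M in T.
  replace (X * (1 + M / X) - X / 2) with (M + X / 2) in T by (field; lra).
  pose proof (pow_le _ h (Rlt_le _ _ (rising_pos (1 + M / X) m ltac:(lra)))).
  assert (0 <= rising (1 + M / X) m ^ h * (X * X / 2)) by (apply Rmult_le_pos; nra).
  apply Rmult_le_reg_r with (M + X / 2); [lra | nra].
Qed.

Lemma branch_coef_ratio h m : (1 <= h)%nat ->
  Rabs (branch_coef h (S (S m))) ^ h <= growth h * Rabs (branch_coef h (S m)) ^ h.
Proof.
  intros Hh. rewrite !branch_coef_succ by auto.
  set (X := INR h). set (M := INR m). set (L := 1 + M / X).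
  assert (HX : 1 <= X) by (apply (le_INR 1); lia). assert (HM : 0 <= M) by apply pos_INR.
  assert (HL : 1 <= L) by (pose proof (Rdiv_le_0_compat M X HM ltac:(lra)); unfold L; lra).
  replace (1 + INR (S m) / X) with (L + 1 / X) by (unfold L; rewrite S_INR; fold M; field; lra).
  change (rising (L + 1 / X) (S m)) with (rising (L + 1 / X) m * (L + 1 / X + M)).
  change (fact (S (S m))) with (S (S m) * fact (S m))%nat. rewrite mult_INR.
  replace (INR (S (S m))) with (M + 2) by (rewrite !S_INR; fold M; ring).
  set (F := INR (fact (S m))). assert (HF : 0 < F) by apply INR_fact_pos.
  set (P := rising L m). set (P' := rising (L + 1 / X) m).
  assert (HP : 0 < P) by (apply rising_pos; lra).
  set (u := / X / F). assert (Hu : 0 < u) by (apply Rdiv_lt_0_compat; [apply Rinv_0_lt_compat|]; lra).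
  set (rho := (X + 1) * (M + 1) / (X * (M + 2))).
  assert (Hrho : 0 <= rho <= (X + 1) / X).
  { unfold rho. split; [apply Rdiv_le_0_compat; nra|].
    apply Rmult_le_reg_r with (X * (M + 2)); [nra|].
    replace ((X + 1) * (M + 1) / (X * (M + 2)) * (X * (M + 2))) with ((X + 1) * (M + 1)) by (field; lra).
    replace ((X + 1) / X * (X * (M + 2))) with ((X + 1) * (M + 2)) by (field; lra). nra. }
  pose proof (proj1 Hrho).
  replace (- (/ X * (P' * (L + 1 / X + M)) / ((M + 2) * F))) with (- (u * P' * rho))
    by (unfold u, rho, L; field; lra).
  replace (- (/ X * P / F)) with (- (u * P)) by (unfold u; field; lra).
  assert (HP' : 0 <= P') by (apply Rlt_le, rising_pos; pose proof (Rdiv_lt_0_compat 1 X ltac:(lra) ltac:(lra)); lra).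
  assert (0 <= u * P' * rho) by (apply Rmult_le_pos; [apply Rmult_le_pos|]; lra).
  assert (0 <= u * P) by (apply Rmult_le_pos; lra).
  rewrite !Rabs_Ropp, !Rabs_pos_eq by assumption.
  assert (Hshift : P' ^ h <= (X + 1) * P ^ h) by apply rising_shift_pow_le, Hh.
  replace (growth h) with ((X + 1) * ((X + 1) / X) ^ h)
    by (unfold growth; fold X; rewrite Nat.add_1_r; simpl; unfold Rdiv; rewrite Rpow_mult_distr, pow_inv; ring).
  rewrite !Rpow_mult_distr.
  pose proof (pow_le u h ltac:(lra)). pose proof (pow_incr rho ((X + 1) / X) h Hrho).
  pose proof (pow_le rho h ltac:(lra)). pose proof (pow_le P h ltac:(lra)).
  apply Rle_trans with (u ^ h * ((X + 1) * P ^ h) * rho ^ h).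
  - apply Rmult_le_compat_r, Rmult_le_compat_l; auto.
  - replace ((X + 1) * ((X + 1) / X) ^ h * (u ^ h * P ^ h))
      with (u ^ h * ((X + 1) * P ^ h) * ((X + 1) / X) ^ h) by ring.
    apply Rmult_le_compat_l; auto. apply Rmult_le_pos; [|apply Rmult_le_pos]; lra.
Qed.

Lemma Rpower_pos a e : 0 < Rpower a e.
Proof. apply exp_pos. Qed.

Lemma pow_Rpower a e n : 0 < a -> Rpower a e ^ n = Rpower a (e * INR n).
Proof. intros Ha. rewrite <- Rpower_pow by apply Rpower_pos. apply Rpower_mult. Qed.

Lemma pow_Rpower_inv a h : 0 < a -> (1 <= h)%nat -> Rpower a (1 / INR h) ^ h = a.
Proof.
  intros Ha Hh. assert (1 <= INR h) by (apply (le_INR 1); lia).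
  rewrite pow_Rpower by auto. replace (1 / INR h * INR h) with 1 by (field; lra).
  apply Rpower_1, Ha.
Qed.

Lemma pow_Rpower_opp_inv a h : 0 < a -> (1 <= h)%nat -> Rpower a (- (1 / INR h)) ^ h = / a.
Proof.
  intros Ha Hh. rewrite Rpower_Ropp, pow_inv, pow_Rpower_inv; auto.
Qed.

Definition growth_root (h : nat) : R := Rpower (growth h) (1 / INR h).

Lemma abs_conv_branch_coef h s : (2 <= h)%nat -> 0 <= s -> growth_root h * s < 1 ->
  abs_conv (branch_coef h) s.
Proof.
  intros Hh Hs Hq. set (q := growth_root h * s) in *.
  assert (Hq0 : 0 <= q) by (apply Rmult_le_pos; [apply Rlt_le, Rpower_pos | lra]).
  set (d := fun n => Rabs (branch_coef h n) * s ^ n).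
  assert (Hd : forall n, 0 <= d n) by (intros n; apply Rmult_le_pos; [apply Rabs_pos | apply pow_le; lra]).
  assert (Hr : forall n, d (S (S n)) <= q * d (S n)).
  { intros n. unfold d. change (s ^ S (S n)) with (s * s ^ S n).
    pose proof (pow_le s (S n) Hs).
    assert (Rabs (branch_coef h (S (S n))) * s <= q * Rabs (branch_coef h (S n))).
    { apply pow_le_reg with h; try lia.
      - apply Rmult_le_pos; [apply Rabs_pos | lra].
      - apply Rmult_le_pos; [lra | apply Rabs_pos].
      - unfold q, growth_root. rewrite !Rpow_mult_distr, pow_Rpower_inv by (try apply growth_pos; lia).
        pose proof (pow_le s h Hs).
        replace (growth h * s ^ h * Rabs (branch_coef h (S n)) ^ h)
          with ((growth h * Rabs (branch_coef h (S n)) ^ h) * s ^ h) by ring.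
        apply Rmult_le_compat_r; [lra | apply branch_coef_ratio; lia]. }
    replace (Rabs (branch_coef h (S (S n))) * (s * s ^ S n))
      with ((Rabs (branch_coef h (S (S n))) * s) * s ^ S n) by ring.
    replace (q * (Rabs (branch_coef h (S n)) * s ^ S n))
      with ((q * Rabs (branch_coef h (S n))) * s ^ S n) by ring.
    apply Rmult_le_compat_r; auto. }
  apply (proj1 (ex_series_ratio_le d q ltac:(split; lra) Hd Hr)).
Qed.

(* The common modulus [(1/2)^((h+1)/h)] of the points [zeta^j (1/2)^((h+1)/h)]. *)
Definition xmod (h : nat) : R := Rpower (1 / 2) ((INR h + 1) / INR h).

Lemma xmod_pos h : 0 < xmod h.
Proof. apply Rpower_pos. Qed.

Lemma xmod_pow h : (1 <= h)%nat -> xmod h ^ h = 1 / 2 ^ (h + 1).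
Proof.
  intros Hh. assert (1 <= INR h) by (apply (le_INR 1); lia).
  unfold xmod. rewrite pow_Rpower by lra.
  replace ((INR h + 1) / INR h * INR h) with (INR (h + 1)) by (rewrite plus_INR; simpl; field; lra).
  rewrite Rpower_pow by lra. unfold Rdiv. rewrite !Rmult_1_l, pow_inv. reflexivity.
Qed.

Lemma growth_root_xmod_lt_1 h : (2 <= h)%nat -> growth_root h * xmod h < 1.
Proof.
  intros Hh. pose proof (Rpower_pos (growth h) (1 / INR h)). pose proof (xmod_pos h).
  destruct (Rlt_le_dec (growth_root h * xmod h) 1) as [|Hge]; auto.
  pose proof (pow_incr 1 (growth_root h * xmod h) h ltac:(lra)) as H1.
  unfold growth_root in H1.
  rewrite pow1, Rpow_mult_distr, pow_Rpower_inv, xmod_pow in H1 by (try apply growth_pos; lia).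
  pose proof (growth_div_pow2_le h Hh). unfold Rdiv in *. lra.
Qed.

Lemma xmod_lt_radius h : (2 <= h)%nat -> exists s, xmod h < s /\ growth_root h * s < 1.
Proof.
  intros Hh. pose proof (growth_root_xmod_lt_1 h Hh).
  assert (HQ : 0 < growth_root h) by apply Rpower_pos.
  exists ((xmod h + / growth_root h) / 2). split.
  - assert (xmod h < / growth_root h); [|lra].
    apply Rmult_lt_reg_l with (growth_root h); auto. rewrite Rinv_r; lra.
  - replace (growth_root h * ((xmod h + / growth_root h) / 2))
      with ((growth_root h * xmod h + 1) / 2) by (field; lra). lra.
Qed.

(** * The series [g] on the circle [|x| = (1/2)^((h+1)/h)] *)

(* On [[0, xmod h]], [branch h] is the branch through [(0, 1)] of the inverse of [u - u^(h+1)]. *)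
Definition branch (h : nat) (s : R) : R := PSeries (branch_coef h) s.

Lemma cseries_branch_RtoC h s : cseries (branch_coef h) (RtoC s) = RtoC (branch h s).
Proof. rewrite cseries_RtoC. reflexivity. Qed.

Lemma branch_eq h s : (2 <= h)%nat -> 0 <= s -> growth_root h * s < 1 ->
  branch h s - branch h s ^ S h = s.
Proof.
  intros Hh Hs Hq.
  assert (Hc : abs_conv (branch_coef h) (Cmod (RtoC s)))
    by (rewrite Cmod_R, Rabs_pos_eq by auto; apply abs_conv_branch_coef; auto).
  pose proof (cseries_branch_coef_eq h (RtoC s) ltac:(lia) Hc) as E.
  rewrite cseries_branch_RtoC, <- RtoC_pow, <- RtoC_minus in E.
  apply RtoC_inj in E. exact E.
Qed.

Lemma Rabs_le_CV_radius (a : nat -> R) s :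
  ex_series (fun n => a n * s ^ n) -> Rbar_le (Rabs s) (CV_radius a).
Proof.
  intros Hex. destruct (Rbar_le_lt_dec (Rabs s) (CV_radius a)) as [|Hlt]; auto.
  exfalso. exact (CV_disk_outside a s Hlt (ex_series_lim_0 _ Hex)).
Qed.

Lemma branch_continuous h s : (2 <= h)%nat -> 0 <= s <= xmod h -> continuity_pt (branch h) s.
Proof.
  intros Hh Hs. apply PSeries_continuity. pose proof (xmod_pos h).
  destruct (xmod_lt_radius h Hh) as [s' [Hs'1 Hs'2]].
  pose proof (abs_conv_branch_coef h s' Hh ltac:(lra) Hs'2) as Hc.
  apply Rbar_lt_le_trans with (Rabs s'); [|apply Rabs_le_CV_radius, ex_series_Rabs].
  - rewrite !Rabs_pos_eq by lra. simpl. lra.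
  - revert Hc. apply ex_series_ext. intros n.
    rewrite Rabs_mult, (Rabs_pos_eq (s' ^ n)); auto. apply pow_le. lra.
Qed.

(* [ucrit h = (h+1)^(-1/h)] is where [u - u^(h+1)] attains its maximum on [u >= 0]. *)
Definition ucrit (h : nat) : R := Rpower (INR h + 1) (- (1 / INR h)).
Definition vroot (h : nat) : R := Rpower 2 (- (1 / INR h)).

Lemma ucrit_pow h : (1 <= h)%nat -> ucrit h ^ h = / (INR h + 1).
Proof. intros Hh. apply pow_Rpower_opp_inv; auto. pose proof (pos_INR h). lra. Qed.

Lemma vroot_pow h : (1 <= h)%nat -> vroot h ^ h = / 2.
Proof. intros Hh. apply pow_Rpower_opp_inv; auto. lra. Qed.

Lemma ucrit_lt_1 h : (1 <= h)%nat -> ucrit h < 1.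
Proof.
  intros Hh. assert (1 <= INR h) by (apply (le_INR 1); lia).
  destruct (Rlt_le_dec (ucrit h) 1) as [|Hge]; auto.
  pose proof (pow_incr 1 (ucrit h) h ltac:(lra)) as Hpow.
  rewrite pow1, ucrit_pow in Hpow by auto.
  assert (/ (INR h + 1) < 1) by (rewrite <- Rinv_1; apply Rinv_lt_contravar; lra). lra.
Qed.

Lemma ucrit_le_vroot h : (1 <= h)%nat -> ucrit h <= vroot h.
Proof.
  intros Hh. assert (1 <= INR h) by (apply (le_INR 1); lia).
  unfold ucrit, vroot. rewrite !Rpower_Ropp.
  apply Rinv_le_contravar; [apply Rpower_pos|].
  apply Rle_Rpower_l; [apply Rlt_le, Rdiv_lt_0_compat | split]; lra.
Qed.

Lemma xmod_vroot h : (1 <= h)%nat -> xmod h = vroot h / 2.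
Proof.
  intros Hh. assert (1 <= INR h) by (apply (le_INR 1); lia).
  unfold xmod, vroot. rewrite Rpower_Ropp.
  replace ((INR h + 1) / INR h) with (1 / INR h + 1) by (field; lra).
  unfold Rpower. rewrite Rmult_plus_distr_r, exp_plus, Rmult_1_l.
  replace (ln (1 / 2)) with (- ln 2) by (rewrite Rdiv_1_l, ln_Rinv; lra).
  rewrite <- Ropp_mult_distr_r, !exp_Ropp, exp_ln by lra.
  field. apply Rgt_not_eq, exp_pos.
Qed.

Lemma xmod_lt_crit_value h : (2 <= h)%nat -> xmod h < ucrit h - ucrit h ^ S h.
Proof.
  intros Hh. assert (2 <= INR h) by (apply (le_INR 2); lia).
  assert (Hu : ucrit h ^ h = / (INR h + 1)) by (apply ucrit_pow; lia).
  assert (E : ucrit h - ucrit h ^ S h = ucrit h * (INR h / (INR h + 1)))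
    by (simpl; rewrite Hu; field; lra).
  rewrite E. pose proof (Rpower_pos (INR h + 1) (- (1 / INR h))). pose proof (xmod_pos h).
  destruct (Rlt_le_dec (xmod h) (ucrit h * (INR h / (INR h + 1)))) as [|Hge]; auto.
  exfalso.
  pose proof (pow_incr (ucrit h * (INR h / (INR h + 1))) (xmod h) h) as Hpow.
  rewrite Rpow_mult_distr, Hu, xmod_pow in Hpow by lia.
  assert (Hg : / (INR h + 1) * (INR h / (INR h + 1)) ^ h = / growth h).
  { unfold growth. rewrite Nat.add_1_r. simpl. unfold Rdiv. rewrite Rpow_mult_distr, pow_inv.
    field. repeat split; try apply pow_nonzero; apply Rgt_not_eq; lra. }
  rewrite Hg in Hpow.
  pose proof (growth_pos h ltac:(lia)). pose proof (growth_div_pow2_le h Hh).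
  assert (0 < 2 ^ (h + 1)) by (apply pow_lt; lra).
  assert (Hinv : / growth h <= / 2 ^ (h + 1)).
  { rewrite <- (Rdiv_1_l (2 ^ (h + 1))). apply Hpow. split; [|lra].
    apply Rmult_le_pos; [unfold ucrit; lra | apply Rdiv_le_0_compat; lra]. }
  apply Rinv_le_contravar in Hinv; [|apply Rinv_0_lt_compat; lra].
  rewrite !Rinv_inv in Hinv.
  assert (1 <= growth h / 2 ^ (h + 1)); [|lra].
  apply Rmult_le_reg_r with (2 ^ (h + 1)); [lra|].
  unfold Rdiv. rewrite Rmult_assoc, Rinv_l; lra.
Qed.

Lemma branch_0 h : branch h 0 = 1.
Proof. apply PSeries_0. Qed.

(* [branch h] starts at [1 > ucrit h]; reaching the level [ucrit h] on [[0, xmod h]]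
   would force [s = ucrit h - ucrit h ^ (h+1)], which exceeds [xmod h]. *)
Lemma ucrit_le_branch_xmod h : (2 <= h)%nat -> ucrit h <= branch h (xmod h).
Proof.
  intros Hh. pose proof (xmod_pos h). pose proof (ucrit_lt_1 h ltac:(lia)).
  destruct (Rle_lt_dec (ucrit h) (branch h (xmod h))) as [|Hlt]; auto.
  destruct (IVT_interv (fun s => ucrit h - branch h s) 0 (xmod h)) as [z [Hz Fz]].
  - intros a Ha. apply continuity_pt_minus; [apply continuity_pt_const; intros ? ?; auto |].
    apply branch_continuous; auto.
  - auto.
  - rewrite branch_0. lra.
  - lra.
  - exfalso. assert (Hq : growth_root h * z < 1).
    { apply Rle_lt_trans with (growth_root h * xmod h); [|apply growth_root_xmod_lt_1; auto].
      apply Rmult_le_compat_l; [apply Rlt_le, Rpower_pos | lra]. }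
    pose proof (branch_eq h z Hh ltac:(lra) Hq) as Ez.
    replace (branch h z) with (ucrit h) in Ez by lra.
    pose proof (xmod_lt_crit_value h Hh). lra.
Qed.

Fixpoint hsum (a b : R) (n : nat) : R :=
  match n with O => 1 | S m => b * hsum a b m + a ^ S m end.

Lemma pow_sub_pow a b n : a ^ S n - b ^ S n = (a - b) * hsum a b n.
Proof.
  induction n as [|n IH]; [simpl; ring|].
  change (hsum a b (S n)) with (b * hsum a b n + a ^ S n).
  replace (a ^ S (S n) - b ^ S (S n)) with (b * (a ^ S n - b ^ S n) + (a - b) * a ^ S n)
    by (simpl; ring).
  rewrite IH. ring.
Qed.

Lemma hsum_ge a b c n : 0 <= c -> c <= a -> c <= b -> b ^ n + INR n * c ^ n <= hsum a b n.
Proof.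
  intros Hc Ha Hb. induction n as [|n IH]; [simpl; lra|].
  change (hsum a b (S n)) with (b * hsum a b n + a ^ S n).
  pose proof (pow_incr c a (S n) ltac:(lra)). pose proof (pow_le c n Hc). pose proof (pos_INR n).
  assert (b * (b ^ n + INR n * c ^ n) <= b * hsum a b n) by (apply Rmult_le_compat_l; lra).
  assert (INR n * (c * c ^ n) <= INR n * (b * c ^ n)) by (apply Rmult_le_compat_l; nra).
  rewrite S_INR. simpl in *. nra.
Qed.

(* Both [branch h (xmod h)] and [vroot h] solve [u - u^(h+1) = xmod h] on [[ucrit h, 1]],
   where [u - u^(h+1)] is injective. *)
Lemma branch_xmod h : (2 <= h)%nat -> branch h (xmod h) = vroot h.
Proof.
  intros Hh. assert (2 <= INR h) by (apply (le_INR 2); lia).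
  pose proof (ucrit_le_branch_xmod h Hh). pose proof (ucrit_le_vroot h ltac:(lia)).
  pose proof (Rpower_pos (INR h + 1) (- (1 / INR h))).
  pose proof (branch_eq h (xmod h) Hh (Rlt_le _ _ (xmod_pos h)) (growth_root_xmod_lt_1 h Hh)) as E1.
  assert (Hv : vroot h ^ h = / 2) by (apply vroot_pow; lia).
  assert (E2 : vroot h - vroot h ^ S h = xmod h)
    by (rewrite xmod_vroot by lia; simpl; rewrite Hv; field).
  set (g := branch h (xmod h)) in *.
  destruct (Req_dec g (vroot h)) as [|Hne]; auto. exfalso.
  assert (Hhs : hsum g (vroot h) h = 1).
  { pose proof (pow_sub_pow g (vroot h) h) as F.
    assert (Hprod : (g - vroot h) * (hsum g (vroot h) h - 1) = 0) by lra.
    destruct (Rmult_integral _ _ Hprod); lra. }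
  pose proof (hsum_ge g (vroot h) (ucrit h) h ltac:(unfold ucrit; lra) ltac:(auto) ltac:(auto)) as Hge.
  rewrite Hv, ucrit_pow in Hge by lia.
  assert (INR h * / (INR h + 1) >= 2 / 3).
  { apply Rle_ge, Rmult_le_reg_r with (3 * (INR h + 1)); [lra|].
    replace (INR h * / (INR h + 1) * (3 * (INR h + 1))) with (3 * INR h) by (field; lra). lra. }
  lra.
Qed.

Lemma abs_conv_branch_xmod h : (2 <= h)%nat -> abs_conv (branch_coef h) (xmod h).
Proof.
  intros Hh. apply abs_conv_branch_coef; auto.
  - apply Rlt_le, xmod_pos.
  - apply growth_root_xmod_lt_1, Hh.
Qed.

(* All coefficients but the first are [<= 0], so the absolute tail at [xmod h] is
   [1 - branch h (xmod h)]. *)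
Lemma Series_abs_branch_tail h : (2 <= h)%nat ->
  Series (fun k => Rabs (branch_coef h (S k)) * xmod h ^ S k) = 1 - vroot h.
Proof.
  intros Hh. pose proof (xmod_pos h).
  assert (Hex : ex_series (fun n => branch_coef h n * xmod h ^ n)).
  { apply ex_series_Rabs. generalize (abs_conv_branch_xmod h Hh).
    apply ex_series_ext. intros n. rewrite Rabs_mult, (Rabs_pos_eq (xmod h ^ n)); auto.
    apply pow_le. lra. }
  assert (G : Series (fun n => branch_coef h n * xmod h ^ n) = vroot h)
    by (rewrite <- (branch_xmod h Hh); reflexivity).
  rewrite Series_incr_1 in G by exact Hex. simpl (branch_coef h 0) in G. simpl (xmod h ^ 0) in G.
  rewrite (Series_ext _ (fun k => - (branch_coef h (S k) * xmod h ^ S k))).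
  - rewrite Series_opp. lra.
  - intros n. rewrite Rabs_left1 by (apply branch_coef_succ_nonpos; lia). ring.
Qed.

Lemma Cmod_branch_sub_1_le h x : (2 <= h)%nat -> Cmod x = xmod h ->
  Cmod (cseries (branch_coef h) x - 1) <= 1 - vroot h.
Proof.
  intros Hh Hx. pose proof (abs_conv_branch_xmod h Hh) as Hc. rewrite <- Hx in Hc.
  rewrite <- (cseries_rothe_0 ((INR h + 1) / INR h) x), <- cseries_minus
    by (auto; apply abs_conv_rothe_0).
  set (c := fun n => branch_coef h n - rothe ((INR h + 1) / INR h) 0 n).
  assert (Ec : forall n, Rabs (c n) * Cmod x ^ n
                         = match n with O => 0 | S k => Rabs (branch_coef h (S k)) * xmod h ^ S k end).
  { intros [|n]; unfold c; rewrite rothe_0_l, Hx; simpl.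
    - unfold branch_coef. simpl. rewrite Rminus_diag, Rabs_R0. ring.
    - rewrite Rminus_0_r. reflexivity. }
  assert (Hex : ex_series (fun n => match n with O => 0 | S k => Rabs (branch_coef h (S k)) * xmod h ^ S k end)).
  { apply ex_series_incr_1. generalize (proj1 (ex_series_incr_1 _) (abs_conv_branch_xmod h Hh)).
    apply ex_series_ext. reflexivity. }
  eapply Rle_trans; [apply Cmod_cseries_le; apply ex_series_ext with (2 := Hex); intros; symmetry; apply Ec|].
  rewrite (Series_ext _ _ Ec), Series_incr_1 by exact Hex.
  rewrite Series_abs_branch_tail by auto. lra.
Qed.

Lemma vroot_le_Cmod_branch h x : (2 <= h)%nat -> Cmod x = xmod h ->
  vroot h <= Cmod (cseries (branch_coef h) x).
Proof.
  intros Hh Hx. pose proof (Cmod_branch_sub_1_le h x Hh Hx).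
  set (g := cseries (branch_coef h) x) in *.
  pose proof (Cmod_triangle g (- (g - 1))%C) as Htri.
  rewrite Cmod_opp in Htri. replace (g + - (g - 1))%C with (RtoC 1) in Htri by ring.
  rewrite Cmod_1 in Htri. lra.
Qed.

(** * The roots [r_i] *)

Definition trinomial (h : nat) (z : C) : C := (RtoC 1 - RtoC 2 * z + Cpow z (h + 1))%C.

Lemma Bpow_cseries t r x :
  (forall m, t * INR (S m) + r <> 0) -> Bpow t r x = cseries (rothe t r) x.
Proof. intros H. apply (cseries_ext (Bcoef t r)). intros n. apply Bcoef_rothe, H. Qed.

Lemma fuss_denom_neq_0 h m : (INR h + 1) * INR (S m) + 1 <> 0.
Proof. pose proof (pos_INR h). pose proof (pos_INR m). rewrite S_INR. nra. Qed.

Lemma branch_denom_neq_0 h m : (1 <= h)%nat ->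
  (INR h + 1) / INR h * INR (S m) + - (1 / INR h) <> 0.
Proof.
  intros Hh. assert (1 <= INR h) by (apply (le_INR 1); lia). pose proof (pos_INR m).
  replace ((INR h + 1) / INR h * INR (S m) + - (1 / INR h)) with ((INR h * (INR m + 1) + INR m) / INR h)
    by (rewrite S_INR; field; lra).
  apply Rgt_not_eq, Rdiv_lt_0_compat; nra.
Qed.

Definition xpoint (h j : nat) : C := (Cpow (zeta h) j * RtoC (xmod h))%C.

Lemma Cmod_xpoint h j : Cmod (xpoint h j) = xmod h.
Proof.
  unfold xpoint. rewrite Cmod_mult, Cmod_zeta_pow, Cmod_R, Rabs_pos_eq by apply Rlt_le, xmod_pos.
  ring.
Qed.

Lemma root_r_last h : root_r h h = (RtoC (1 / 2) * cseries (fuss h) (RtoC (1 / 2 ^ (h + 1))))%C.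
Proof. unfold root_r. rewrite Nat.eqb_refl, Bpow_cseries; auto using fuss_denom_neq_0. Qed.

Lemma root_r_lt h j : (1 <= h)%nat -> (j < h)%nat ->
  root_r h j = (/ Cpow (zeta h) j * RtoC (Rpower 2 (1 / INR h)) * cseries (branch_coef h) (xpoint h j))%C.
Proof.
  intros Hh Hj. unfold root_r. replace (Nat.eqb j h) with false by (symmetry; apply Nat.eqb_neq; lia).
  rewrite Bpow_cseries by (intros m; apply branch_denom_neq_0, Hh). reflexivity.
Qed.

Lemma trinomial_root_last h : (2 <= h)%nat -> trinomial h (root_r h h) = 0%C.
Proof.
  intros Hh. rewrite root_r_last. destruct (fuss_series_bounds h Hh) as [Hc _].
  set (y := 1 / 2 ^ (h + 1)) in *.
  assert (Hy : 0 < y) by (apply Rdiv_lt_0_compat; [lra | apply pow_lt; lra]).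
  rewrite <- (Rabs_pos_eq y), <- Cmod_R in Hc by lra.
  pose proof (cseries_fuss_eq h (RtoC y) Hc) as E.
  set (B := cseries (fuss h) (RtoC y)) in *.
  unfold trinomial. rewrite Cpow_mult_l, <- RtoC_pow.
  replace ((1 / 2) ^ (h + 1)) with y by (unfold y, Rdiv; rewrite !Rmult_1_l, pow_inv; reflexivity).
  replace (RtoC 1 - RtoC 2 * (RtoC (1 / 2) * B) + RtoC y * Cpow B (h + 1))%C
    with (RtoC 1 - (RtoC 2 * RtoC (1 / 2)) * B + (RtoC 1 + RtoC y * Cpow B (h + 1)) - RtoC 1)%C by ring.
  rewrite <- E, <- RtoC_mult. replace (2 * (1 / 2)) with 1 by field. ring.
Qed.

Lemma trinomial_scaled_root h (c x g : C) :
  Cpow c h = RtoC 2 -> (c * x = RtoC (1 / 2))%C -> (g - Cpow g (S h) = x)%C ->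
  trinomial h (c * g) = 0%C.
Proof.
  intros Hc Hcx Hg. unfold trinomial.
  replace (h + 1)%nat with (S h) by lia.
  rewrite Cpow_mult_l, Cpow_S, Hc.
  replace (Cpow g (S h)) with (g - x)%C by (rewrite <- Hg; ring).
  replace (RtoC 1 - RtoC 2 * (c * g) + c * RtoC 2 * (g - x))%C with (RtoC 1 - RtoC 2 * (c * x))%C by ring.
  rewrite Hcx, <- RtoC_mult, <- RtoC_minus. f_equal. field.
Qed.

Lemma trinomial_root_lt h j : (2 <= h)%nat -> (j < h)%nat -> trinomial h (root_r h j) = 0%C.
Proof.
  intros Hh Hj. rewrite root_r_lt by lia.
  pose proof (zeta_pow_neq_0 h j).
  apply trinomial_scaled_root with (x := xpoint h j).
  - rewrite Cpow_mult_l, <- RtoC_pow, pow_Rpower_inv, Cpow_inv by (auto; lia || lra).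
    rewrite <- Cpow_mult_r, Nat.mul_comm, Cpow_mult_r, zeta_pow_self, Cpow_1_l by lia. field.
  - unfold xpoint.
    replace (/ Cpow (zeta h) j * RtoC (Rpower 2 (1 / INR h)) * (Cpow (zeta h) j * RtoC (xmod h)))%C
      with (RtoC (Rpower 2 (1 / INR h) * xmod h)) by (rewrite RtoC_mult; field; auto).
    f_equal. rewrite xmod_vroot by lia. unfold vroot. rewrite Rpower_Ropp.
    field. apply Rgt_not_eq, Rpower_pos.
  - apply cseries_branch_coef_eq; [lia|]. rewrite Cmod_xpoint. apply abs_conv_branch_xmod, Hh.
Qed.

Lemma trinomial_root h i : (2 <= h)%nat -> (i <= h)%nat -> trinomial h (root_r h i) = 0%C.
Proof.
  intros Hh Hi. destruct (Nat.eq_dec i h) as [->|Hne].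
  - apply trinomial_root_last, Hh.
  - apply trinomial_root_lt; auto; lia.
Qed.

Lemma root_r_last_real h : (2 <= h)%nat ->
  exists rho, root_r h h = RtoC rho /\ 1 / 2 <= rho <= 9 / 10.
Proof.
  intros Hh. rewrite root_r_last, cseries_RtoC, <- RtoC_mult.
  destruct (fuss_series_bounds h Hh) as [_ Hb]. eexists. split; [reflexivity | lra].
Qed.

Lemma Rpower2_inv_le h : (1 <= h)%nat -> Rpower 2 (1 / INR h) <= 1 + 1 / INR h.
Proof.
  intros Hh. assert (1 <= INR h) by (apply (le_INR 1); lia).
  assert (0 < 1 / INR h) by (apply Rdiv_lt_0_compat; lra).
  apply pow_le_reg with h; try lia; try (apply Rlt_le, Rpower_pos); try lra.
  rewrite pow_Rpower_inv by (lra || lia).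
  pose proof (Rle_pow_lin (1 / INR h) h ltac:(lra)) as B.
  replace (INR h * (1 / INR h)) with 1 in B by (field; lra). lra.
Qed.

Lemma Rpower2_vroot h : Rpower 2 (1 / INR h) * vroot h = 1.
Proof. unfold vroot. rewrite Rpower_Ropp. apply Rinv_r, Rgt_not_eq, Rpower_pos. Qed.

Lemma Cmod_root_r_lt h j : (2 <= h)%nat -> (j < h)%nat -> 1 <= Cmod (root_r h j).
Proof.
  intros Hh Hj. rewrite root_r_lt by lia.
  rewrite !Cmod_mult, Cmod_inv, Cmod_zeta_pow, Cmod_R, Rabs_pos_eq, Rinv_1, Rmult_1_l
    by (apply Rlt_le, Rpower_pos || apply zeta_pow_neq_0).
  pose proof (vroot_le_Cmod_branch h (xpoint h j) Hh (Cmod_xpoint h j)).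
  pose proof (Rpower2_vroot h). pose proof (Rpower_pos 2 (1 / INR h)). nra.
Qed.

Lemma Cmod_ratio_sub_1_le (w g1 g2 : C) (v : R) : 0 < v ->
  Cmod (g1 - 1) <= 1 - v -> Cmod (g2 - 1) <= 1 - v -> g2 = (w * g1)%C ->
  Cmod (w - 1) <= 2 * (1 - v) / v.
Proof.
  intros Hv H1 H2 E.
  assert (Hg1 : v <= Cmod g1).
  { pose proof (Cmod_triangle g1 (- (g1 - 1))%C) as Htri.
    rewrite Cmod_opp in Htri. replace (g1 + - (g1 - 1))%C with (RtoC 1) in Htri by ring.
    rewrite Cmod_1 in Htri. lra. }
  assert (K : Cmod (w - 1) * Cmod g1 <= 2 * (1 - v)).
  { rewrite <- Cmod_mult. replace ((w - 1) * g1)%C with ((g2 - 1) - (g1 - 1))%C by (rewrite E; ring).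
    eapply Rle_trans; [apply Cmod_triangle | rewrite Cmod_opp; lra]. }
  apply Rmult_le_reg_r with v; auto.
  replace (2 * (1 - v) / v * v) with (2 * (1 - v)) by (field; lra).
  pose proof (Cmod_ge_0 (w - 1)). nra.
Qed.

(* [r_a = r_b] would force [g(x_b) = zeta^(b-a) g(x_a)], but [g] stays too close to [1] on
   the circle [|x| = xmod h] for the two values to differ by a nontrivial [h]-th root of unity. *)
Lemma root_r_lt_inj h a b : (2 <= h)%nat -> (a < b < h)%nat -> root_r h a <> root_r h b.
Proof.
  intros Hh Hab E. rewrite !root_r_lt in E by lia.
  set (ga := cseries (branch_coef h) (xpoint h a)) in E.
  set (gb := cseries (branch_coef h) (xpoint h b)) in E.
  pose proof (zeta_pow_neq_0 h a). pose proof (zeta_pow_neq_0 h b).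
  pose proof (Rpower_pos 2 (1 / INR h)) as Hc.
  assert (Hc' : RtoC (Rpower 2 (1 / INR h)) <> 0%C) by (intros Z; apply RtoC_inj in Z; lra).
  assert (Eg : gb = (Cpow (zeta h) (b - a) * ga)%C).
  { replace (Cpow (zeta h) (b - a)) with (Cpow (zeta h) b / Cpow (zeta h) a)%C
      by (replace b with (a + (b - a))%nat at 1 by lia; rewrite Cpow_add_r; field; auto).
    apply (f_equal (fun z => Cpow (zeta h) b * / RtoC (Rpower 2 (1 / INR h)) * z)%C) in E.
    replace (Cpow (zeta h) b * / RtoC (Rpower 2 (1 / INR h))
             * (/ Cpow (zeta h) b * RtoC (Rpower 2 (1 / INR h)) * gb))%C
      with gb in E by (field; auto).
    rewrite <- E. field. auto. }
  assert (Hv : 0 < vroot h) by apply Rpower_pos.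
  pose proof (Cmod_ratio_sub_1_le _ _ _ _ Hv
    (Cmod_branch_sub_1_le h _ Hh (Cmod_xpoint h a)) (Cmod_branch_sub_1_le h _ Hh (Cmod_xpoint h b)) Eg) as Hw.
  pose proof (Cmod_zeta_pow_sub_1 h (b - a) Hh ltac:(lia)).
  pose proof (Rpower2_inv_le h ltac:(lia)). pose proof (Rpower2_vroot h).
  assert (2 <= INR h) by (apply (le_INR 2); lia).
  assert (2 * (1 - vroot h) / vroot h = 2 * (Rpower 2 (1 / INR h) - 1)).
  { unfold vroot in *. field_simplify_eq; [nra | lra]. }
  assert (2 * (Rpower 2 (1 / INR h) - 1) <= 2 / INR h) by (unfold Rdiv in *; lra).
  lra.
Qed.

Lemma roots_distinct h i k : (2 <= h)%nat -> (i <= h)%nat -> (k <= h)%nat -> i <> k ->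
  root_r h i <> root_r h k.
Proof.
  intros Hh Hi Hk Hik.
  assert (Hlast : forall j, (j < h)%nat -> root_r h h <> root_r h j).
  { intros j Hj E. destruct (root_r_last_real h Hh) as [rho [Er Hr]].
    pose proof (Cmod_root_r_lt h j Hh Hj) as M. rewrite <- E, Er, Cmod_R, Rabs_pos_eq in M; lra. }
  destruct (Nat.eq_dec i h) as [->|Hi']; [apply Hlast; lia|].
  destruct (Nat.eq_dec k h) as [->|Hk']; [intros E; symmetry in E; revert E; apply Hlast; lia|].
  destruct (Nat.lt_ge_cases i k).
  - apply root_r_lt_inj; auto; lia.
  - intros E. symmetry in E. revert E. apply root_r_lt_inj; auto; lia.
Qed.

Lemma Cmod_root_r_ge h i : (2 <= h)%nat -> (i <= h)%nat -> 1 / 2 <= Cmod (root_r h i).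
Proof.
  intros Hh Hi. destruct (Nat.eq_dec i h) as [->|Hne].
  - destruct (root_r_last_real h Hh) as [rho [E Hr]]. rewrite E, Cmod_R, Rabs_pos_eq; lra.
  - pose proof (Cmod_root_r_lt h i Hh ltac:(lia)). lra.
Qed.

(** * Factorization and the expansion of the reciprocal *)

Lemma cprod_ext_lt (f g : nat -> C) N : (forall j, (j < N)%nat -> f j = g j) -> cprod f N = cprod g N.
Proof.
  induction N as [|N IH]; intros H; simpl; auto.
  f_equal; [apply IH; intros j Hj|]; apply H; lia.
Qed.

Lemma csum_ext_lt (f g : nat -> C) N : (forall j, (j < N)%nat -> f j = g j) -> csum f N = csum g N.
Proof.
  induction N as [|N IH]; intros H; simpl; auto.
  f_equal; [apply IH; intros j Hj|]; apply H; lia.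
Qed.

Lemma cprod_mult (f g : nat -> C) N : cprod (fun j => f j * g j)%C N = (cprod f N * cprod g N)%C.
Proof. induction N as [|N IH]; simpl; [ring | rewrite IH; ring]. Qed.

Lemma cprod_eq_1 (f : nat -> C) N : (forall j, (j < N)%nat -> f j = RtoC 1) -> cprod f N = RtoC 1.
Proof.
  induction N as [|N IH]; intros H; simpl; [reflexivity|].
  rewrite IH, H; [ring | lia | intros j Hj; apply H; lia].
Qed.

Lemma cprod_eq_0 (f : nat -> C) k N : (k < N)%nat -> f k = 0%C -> cprod f N = 0%C.
Proof.
  intros Hk Hf. induction N as [|N IH]; [lia|]. simpl.
  destruct (Nat.eq_dec k N) as [->|Hne]; [rewrite Hf | rewrite IH by lia]; ring.
Qed.

Lemma cprod_neq_0 (f : nat -> C) N : (forall j, (j < N)%nat -> f j <> 0%C) -> cprod f N <> 0%C.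
Proof.
  induction N as [|N IH]; intros H; simpl; [apply C1_nz|].
  apply Cmult_neq_0; [apply IH; intros; apply H | apply H]; lia.
Qed.

Lemma cprod_extract (f : nat -> C) i N : (i < N)%nat ->
  cprod f N = (f i * cprod (fun j => if Nat.eqb j i then RtoC 1 else f j) N)%C.
Proof.
  induction N as [|N IH]; intros Hi; [lia|]. simpl.
  destruct (Nat.eq_dec i N) as [->|Hne].
  - rewrite Nat.eqb_refl, (cprod_ext_lt (fun j => if Nat.eqb j N then RtoC 1 else f j) f); [ring|].
    intros j Hj. replace (Nat.eqb j N) with false by (symmetry; apply Nat.eqb_neq; lia). auto.
  - rewrite IH by lia. replace (Nat.eqb N i) with false by (symmetry; apply Nat.eqb_neq; lia). ring.
Qed.

Lemma csum_single (f : nat -> C) k N : (k < N)%nat ->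
  (forall j, (j < N)%nat -> j <> k -> f j = 0%C) -> csum f N = f k.
Proof.
  induction N as [|N IH]; intros Hk H; [lia|]. simpl.
  destruct (Nat.eq_dec k N) as [->|Hne].
  - rewrite (csum_ext_lt f (fun _ => 0%C)) by (intros j Hj; apply H; lia).
    assert (Z : forall M, csum (fun _ => 0%C) M = 0%C) by (induction M; simpl; [|rewrite IHM]; ring).
    rewrite Z. ring.
  - rewrite IH, (H N) by (auto; lia). ring.
Qed.

Lemma csum_mult_r (f : nat -> C) c N : csum (fun i => f i * c)%C N = (csum f N * c)%C.
Proof. induction N as [|N IH]; simpl; [ring | rewrite IH; ring]. Qed.

Lemma csum_mult_l (f : nat -> C) c N : csum (fun i => c * f i)%C N = (c * csum f N)%C.
Proof. induction N as [|N IH]; simpl; [ring | rewrite IH; ring]. Qed.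

Lemma cprod_monic (f : nat -> C) m :
  is_poly m (fun z => cprod (fun i => z - f i) (S m) - Cpow z (S m))%C.
Proof.
  induction m as [|m IH].
  - exists (- f 0%nat)%C. intros z. simpl. ring.
  - apply is_poly_ext with
      (fun z => - f (S m) * Cpow z (S m) + z * (cprod (fun i => z - f i) (S m) - Cpow z (S m))
                - f (S m) * (cprod (fun i => z - f i) (S m) - Cpow z (S m)))%C.
    + apply is_poly_plus; [apply is_poly_plus|].
      * apply is_poly_scal, is_poly_pow.
      * apply is_poly_mulX, IH.
      * apply is_poly_succ. apply is_poly_ext with (fun z => (- f (S m)) * (cprod (fun i => z - f i) (S m) - Cpow z (S m)))%C;
          [apply is_poly_scal, IH | intros; ring].
    + intros z. change (cprod (fun i => z - f i)%C (S (S m))) with (cprod (fun i => z - f i)%C (S m) * (z - f (S m)))%C.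
      rewrite (Cpow_S z (S m)). ring.
Qed.

Definition distinct_on (r : nat -> C) (d : nat) : Prop :=
  forall i j, (i <= d)%nat -> (j <= d)%nat -> i <> j -> r i <> r j.

Lemma monic_eq_cprod d p (r : nat -> C) :
  is_poly d (fun z => p z - Cpow z (d + 1))%C -> distinct_on r d ->
  (forall i, (i <= d)%nat -> p (r i) = 0%C) ->
  forall z, p z = cprod (fun i => z - r i)%C (d + 1).
Proof.
  intros Hp Hr Hroot z. rewrite Nat.add_1_r in *.
  set (D := fun z => (p z - cprod (fun i => z - r i) (S d))%C).
  assert (HD : is_poly d D).
  { apply is_poly_ext with (fun z => (p z - Cpow z (S d)) + (- RtoC 1) * (cprod (fun i => z - r i) (S d) - Cpow z (S d)))%C.
    - apply is_poly_plus; [exact Hp | apply is_poly_scal, cprod_monic].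
    - intros w. unfold D. ring. }
  assert (HD0 : forall i, (i <= d)%nat -> D (r i) = 0%C).
  { intros i Hi. unfold D. rewrite Hroot, (cprod_eq_0 _ i) by (lia || ring). ring. }
  apply Ceq_minus, (is_poly_eq_0 d D r HD Hr HD0).
Qed.

Section Lagrange.
Variables (r : nat -> C) (d : nat).

Definition skip_prod (i N : nat) (z : C) : C :=
  cprod (fun j => if Nat.eqb j i then RtoC 1 else z - r j)%C N.

Lemma skip_prod_S i N z : skip_prod i (S N) z =
  (skip_prod i N z * if Nat.eqb N i then RtoC 1 else z - r N)%C.
Proof. reflexivity. Qed.

Lemma is_poly_skip_prod i N : is_poly N (skip_prod i N).
Proof.
  induction N as [|N IH]; [exists (RtoC 1); auto|].
  destruct (Nat.eqb N i) eqn:E.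
  - apply is_poly_succ, is_poly_ext with (1 := IH). intros z. rewrite skip_prod_S, E. ring.
  - apply is_poly_ext with (fun z => (z - r N) * skip_prod i N z)%C;
      [apply is_poly_mul_lin, IH | intros z; rewrite skip_prod_S, E; ring].
Qed.

Lemma is_poly_skip_prod_lt i N : (i < N)%nat -> is_poly (N - 1) (skip_prod i N).
Proof.
  induction N as [|N IH]; intros Hi; [lia|].
  destruct (Nat.eq_dec N i) as [->|Hne].
  - replace (S i - 1)%nat with i by lia.
    apply is_poly_ext with (1 := is_poly_skip_prod i i). intros z.
    rewrite skip_prod_S, Nat.eqb_refl. ring.
  - replace (S N - 1)%nat with (S (N - 1)) by lia.
    apply is_poly_ext with (fun z => (z - r N) * skip_prod i N z)%C.
    + apply is_poly_mul_lin, IH. lia.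
    + intros z. rewrite skip_prod_S. replace (Nat.eqb N i) with false by (symmetry; apply Nat.eqb_neq; auto).
      ring.
Qed.

Definition lagrange_weight (i : nat) : C :=
  cprod (fun j => if Nat.eqb j i then RtoC 1 else / (r i - r j))%C (d + 1).

Hypothesis r_distinct : distinct_on r d.

Lemma lagrange_sum z : csum (fun i => lagrange_weight i * skip_prod i (d + 1) z)%C (d + 1) = RtoC 1.
Proof.
  apply Ceq_minus. revert z.
  apply (is_poly_eq_0 d _ r); auto.
  - apply is_poly_ext with
      (fun z => csum (fun i => lagrange_weight i * skip_prod i (d + 1) z)%C (d + 1) + (- RtoC 1))%C;
      [|intros; ring].
    apply is_poly_plus; [|apply is_poly_const].
    apply is_poly_csum. intros i Hi. apply is_poly_scal.
    replace d with (d + 1 - 1)%nat at 1 by lia. apply is_poly_skip_prod_lt; auto.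
  - intros k Hk.
    rewrite (csum_single _ k) by (try lia; intros j Hj Hjk; unfold skip_prod;
      rewrite (cprod_eq_0 _ k) by (try lia; replace (Nat.eqb k j) with false
        by (symmetry; apply Nat.eqb_neq; auto); ring); ring).
    unfold lagrange_weight, skip_prod. rewrite <- cprod_mult, cprod_eq_1; [ring|].
    intros j Hj. destruct (Nat.eqb j k) eqn:E; [ring|].
    apply Nat.eqb_neq in E. field. apply Cminus_eq_contra, r_distinct; lia.
Qed.

Lemma partial_fractions z : (forall i, (i <= d)%nat -> z <> r i) ->
  (/ cprod (fun i => z - r i)%C (d + 1))%C = csum (fun i => lagrange_weight i / (z - r i))%C (d + 1).
Proof.
  intros Hz.
  assert (Hzi : forall i, (i < d + 1)%nat -> (z - r i)%C <> 0%C)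
    by (intros i Hi; apply Cminus_eq_contra, Hz; lia).
  pose proof (cprod_neq_0 _ _ Hzi) as HP.
  rewrite (csum_ext_lt _ (fun i => (lagrange_weight i * skip_prod i (d + 1) z) * / cprod (fun i => z - r i)%C (d + 1))%C).
  - rewrite csum_mult_r, lagrange_sum. ring.
  - intros i Hi. rewrite (cprod_extract (fun i => z - r i)%C i) by auto.
    fold (skip_prod i (d + 1) z).
    assert (skip_prod i (d + 1) z <> 0%C).
    { intros E. apply HP. rewrite (cprod_extract (fun i => z - r i)%C i) by auto.
      fold (skip_prod i (d + 1) z). rewrite E. ring. }
    field. split; auto.
Qed.

End Lagrange.

Lemma sum_n_Cpow q N : q <> RtoC 1 ->
  sum_n (fun n => Cpow q n) N = ((RtoC 1 - Cpow q (S N)) / (RtoC 1 - q))%C.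
Proof.
  intros Hq. pose proof (Cminus_eq_contra _ _ (not_eq_sym Hq)) as H1.
  induction N as [|N IH].
  - rewrite sum_O. simpl. field. auto.
  - rewrite sum_Sn, IH, (Cpow_S q (S N)).
    change ((RtoC 1 - Cpow q (S N)) / (RtoC 1 - q) + Cpow q (S N)
            = (RtoC 1 - q * Cpow q (S N)) / (RtoC 1 - q))%C.
    field. auto.
Qed.

Lemma is_series_Cpow q : Cmod q < 1 ->
  @is_series C_AbsRing C_NormedModule (fun n => Cpow q n) (/ (RtoC 1 - q))%C.
Proof.
  intros Hq.
  assert (Hq1 : q <> RtoC 1) by (intros E; rewrite E, Cmod_1 in Hq; lra).
  pose proof (Cminus_eq_contra _ _ (not_eq_sym Hq1)) as H1.
  assert (Hm : 0 < Cmod (RtoC 1 - q)) by (apply Cmod_gt_0; auto).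
  pose proof (is_lim_seq_geom (Cmod q) ltac:(rewrite Rabs_pos_eq by apply Cmod_ge_0; auto)) as G.
  pose proof (proj1 (@filterlim_locally nat R_NormedModule eventually _ _ 0) G) as G'. clear G.
  unfold is_series. apply (proj2 (@filterlim_locally nat C_NormedModule eventually _ _ _)).
  intros eps.
  destruct (G' (mkposreal _ (Rmult_lt_0_compat _ _ (cond_pos eps) Hm))) as [N0 HN0].
  exists N0. intros n Hn. apply norm_compat1.
  change (Cmod (sum_n (fun n => Cpow q n) n - / (RtoC 1 - q))%C < eps).
  rewrite sum_n_Cpow by auto.
  replace ((RtoC 1 - Cpow q (S n)) / (RtoC 1 - q) - / (RtoC 1 - q))%C
    with (- Cpow q (S n) / (RtoC 1 - q))%C by (field; auto).
  unfold Cdiv. rewrite Cmod_mult, Cmod_opp, Cmod_inv, Cmod_pow by auto.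
  specialize (HN0 (S n) ltac:(lia)). simpl in HN0.
  unfold ball in HN0; simpl in HN0. unfold AbsRing_ball, abs, minus, plus, opp in HN0; simpl in HN0.
  change (Cmod q * Cmod q ^ n) with (Cmod q ^ S n) in HN0.
  rewrite Ropp_0, Rplus_0_r, Rabs_pos_eq in HN0 by (apply pow_le, Cmod_ge_0).
  apply Rmult_lt_reg_r with (Cmod (RtoC 1 - q)); auto.
  rewrite Rmult_assoc, Rinv_l, Rmult_1_r by lra. exact HN0.
Qed.

Lemma is_series_csum (f : nat -> nat -> C) (l : nat -> C) N :
  (forall i, (i < N)%nat -> @is_series C_AbsRing C_NormedModule (f i) (l i)) ->
  @is_series C_AbsRing C_NormedModule (fun k => csum (fun i => f i k) N) (csum l N).
Proof.
  induction N as [|N IH]; intros H; simpl.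
  - pose proof (@is_series_finite C_AbsRing C_NormedModule (fun _ => RtoC 0) 0 (fun _ _ => eq_refl)) as Z.
    rewrite sum_O in Z. exact Z.
  - apply (@is_series_plus C_AbsRing C_NormedModule); [apply IH; intros i Hi|]; apply H; lia.
Qed.

Definition recip_coef (r : nat -> C) (d : nat) (n : nat) : C :=
  (- csum (fun i => / Cpow (r i) (n + 1) * lagrange_weight r d i) (d + 1))%C.

(* Partial fractions plus [1 / (z - r) = - sum_n z^n / r^(n+1)] for [|z| < |r|]. *)
Lemma is_pseries_inv_cprod (r : nat -> C) d rho z : distinct_on r d ->
  (forall i, (i <= d)%nat -> rho <= Cmod (r i)) -> 0 < rho -> Cmod z < rho ->
  @is_pseries C_AbsRing C_NormedModule (recip_coef r d) z (/ cprod (fun i => z - r i) (d + 1))%C.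
Proof.
  intros Hdist Hr Hrho Hz.
  assert (Hr0 : forall i, (i <= d)%nat -> r i <> 0%C).
  { intros i Hi E. pose proof (Hr i Hi) as H. rewrite E, Cmod_0 in H. lra. }
  assert (Hzr : forall i, (i <= d)%nat -> Cmod (z / r i) < 1).
  { intros i Hi. pose proof (Hr i Hi). pose proof (proj1 (Cmod_gt_0 _) (Hr0 i Hi)).
    unfold Cdiv. rewrite Cmod_mult, Cmod_inv by auto.
    apply Rmult_lt_reg_r with (Cmod (r i)); auto. rewrite Rmult_assoc, Rinv_l; lra. }
  assert (Hne : forall i, (i <= d)%nat -> z <> r i).
  { intros i Hi E. pose proof (Hzr i Hi) as H. rewrite E in H.
    unfold Cdiv in H. rewrite Cinv_r, Cmod_1 in H by auto. lra. }
  rewrite partial_fractions by auto.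
  set (w := lagrange_weight r d).
  replace (csum (fun i => w i / (z - r i))%C (d + 1))
    with (csum (fun i => (- (w i / r i)) * / (RtoC 1 - z / r i))%C (d + 1)).
  - unfold is_pseries.
    apply is_series_ext with (fun k => csum (fun i => (- (w i / r i)) * Cpow (z / r i) k)%C (d + 1)).
    + intros k. unfold recip_coef. fold w.
      change (csum (fun i => - (w i / r i) * Cpow (z / r i) k)%C (d + 1)
              = Cpow z k * - csum (fun i => / Cpow (r i) (k + 1) * w i) (d + 1))%C.
      replace (Cpow z k * - csum (fun i => / Cpow (r i) (k + 1) * w i) (d + 1))%C
        with (csum (fun i => - Cpow z k * (/ Cpow (r i) (k + 1) * w i)) (d + 1))%C
        by (rewrite csum_mult_l; ring).
      apply csum_ext_lt. intros i Hi. pose proof (Hr0 i ltac:(lia)).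
      unfold Cdiv. rewrite Cpow_mult_l, Cpow_inv, Nat.add_1_r, Cpow_S by auto.
      field. split; auto. apply Cpow_nz. auto.
    + apply is_series_csum. intros i Hi.
      apply (@is_series_scal C_AbsRing C_NormedModule), is_series_Cpow, Hzr. lia.
  - apply csum_ext_lt. intros i Hi. pose proof (Hr0 i ltac:(lia)) as Hri.
    pose proof (Cminus_eq_contra _ _ (Hne i ltac:(lia))) as Hzi.
    assert (Hq : (RtoC 1 - z / r i)%C <> 0%C).
    { intros E. apply Hzi. replace (z - r i)%C with (- r i * (RtoC 1 - z / r i))%C by (field; auto).
      rewrite E. ring. }
    field. repeat split; auto. apply Cminus_eq_contra. intros E. apply (Hne i); [lia | auto].
Qed.

Lemma is_pseries_0_coef (c : nat -> R) rho : 0 < rho ->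
  (forall s, Rabs s < rho -> is_pseries c s 0) -> forall n, c n = 0.
Proof.
  intros Hrho H n.
  assert (Hrad : Rbar_lt 0 (CV_radius c)).
  { apply Rbar_lt_le_trans with (Rabs (rho / 2)); [rewrite Rabs_pos_eq; simpl; lra|].
    apply Rabs_le_CV_radius. exists 0.
    apply is_series_ext with (2 := H (rho / 2) ltac:(rewrite Rabs_pos_eq; lra)).
    intros k. rewrite pow_n_pow. apply Rmult_comm. }
  pose proof (Derive_n_coef c n Hrad) as D.
  rewrite (Derive_n_ext_loc _ (fun _ => 0)) in D.
  - assert (Hcn : c n * INR (fact n) = 0) by (rewrite <- D; destruct n; [reflexivity | apply Derive_n_const]).
    pose proof (INR_fact_pos n). apply Rmult_integral in Hcn. destruct Hcn; [auto | lra].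
  - exists (mkposreal rho Hrho). intros t Ht. apply is_pseries_unique, H.
    unfold ball in Ht; simpl in Ht. unfold AbsRing_ball, abs, minus, plus, opp in Ht; simpl in Ht.
    rewrite Ropp_0, Rplus_0_r in Ht. exact Ht.
Qed.

Lemma is_pseries_C_coef_unique (a b : nat -> C) rho (F : C -> C) : 0 < rho ->
  (forall z, Cmod z < rho -> @is_pseries C_AbsRing C_NormedModule a z (F z)) ->
  (forall z, Cmod z < rho -> @is_pseries C_AbsRing C_NormedModule b z (F z)) ->
  forall n, a n = b n.
Proof.
  intros Hrho Ha Hb.
  assert (K : forall s, Rabs s < rho ->
     is_pseries (fun k => fst (a k) - fst (b k)) s 0 /\ is_pseries (fun k => snd (a k) - snd (b k)) s 0).
  { intros s Hs. rewrite <- Cmod_R in Hs.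
    pose proof (is_series_minus _ _ _ _ (Ha _ Hs) (Hb _ Hs)) as H.
    apply is_series_C in H. destruct H as [H1 H2].
    unfold is_pseries. split; [revert H1 | revert H2];
      match goal with |- is_series _ ?L -> is_series _ ?M => replace L with M by (unfold minus, plus, opp; simpl; ring) end;
      apply is_series_ext; intros k; rewrite pow_n_pow;
      change (scal (pow_n (RtoC s) k) (a k)) with (Cpow (RtoC s) k * a k)%C;
      change (scal (pow_n (RtoC s) k) (b k)) with (Cpow (RtoC s) k * b k)%C;
      rewrite <- RtoC_pow; unfold minus, plus, opp, scal, mult; simpl; unfold mult; simpl; ring. }
  intros n. apply injective_projections; apply Rminus_diag_uniq.
  - apply (is_pseries_0_coef (fun k => fst (a k) - fst (b k)) rho Hrho (fun s Hs => proj1 (K s Hs))).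
  - apply (is_pseries_0_coef (fun k => snd (a k) - snd (b k)) rho Hrho (fun s Hs => proj2 (K s Hs))).
Qed.

Lemma ex_series_Bterm t r x : (forall m, t * INR (S m) + r <> 0) ->
  abs_conv (rothe t r) (Cmod x) -> @ex_series C_AbsRing C_NormedModule (Bterm t r x).
Proof.
  intros Ht Hc. apply (ex_series_cterm (Bcoef t r)).
  apply abs_conv_ext with (2 := Hc). intros n. symmetry. apply Bcoef_rothe, Ht.
Qed.

Lemma trinomial_eq_cprod h : (2 <= h)%nat ->
  forall z, trinomial h z = cprod (fun i => z - root_r h i)%C (h + 1).
Proof.
  intros Hh. apply monic_eq_cprod.
  - apply is_poly_le with 1%nat; [lia|].
    exists (fun _ => (- RtoC 2)%C), (RtoC 1). split.
    + apply is_poly_const.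
    + intros z. unfold trinomial. ring.
  - intros i j Hi Hj. apply roots_distinct; auto.
  - intros i Hi. apply trinomial_root; auto.
Qed.

Lemma is_pseries_inv_trinomial h z : (2 <= h)%nat -> Cmod z < 1 / 2 ->
  @is_pseries C_AbsRing C_NormedModule (recip_coef (root_r h) h) z (/ trinomial h z)%C.
Proof.
  intros Hh Hz. rewrite trinomial_eq_cprod by exact Hh.
  apply is_pseries_inv_cprod with (1 / 2); auto; try lra.
  - intros i j Hi Hj. apply roots_distinct; auto.
  - intros i Hi. apply Cmod_root_r_ge; auto.
Qed.

Theorem mainTheorem2 (h : nat) (Hh : (2 <= h)%nat) :
  (* the defining series converge *)
  (@ex_series C_AbsRing C_NormedModule
     (Bterm (INR h + 1) 1 (RtoC (1 / 2 ^ (h + 1))))) /\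
  (forall j : nat, (j < h)%nat ->
     @ex_series C_AbsRing C_NormedModule
       (Bterm ((INR h + 1) / INR h) (- (1 / INR h))
          (Cpow (zeta h) j * RtoC (Rpower (1/2) ((INR h + 1) / INR h)))%C)) /\
  (* 1 - 2z + z^(h+1) = prod_{i=0}^h (z - r_i) *)
  (forall z : C,
     (RtoC 1 - RtoC 2 * z + Cpow z (h + 1))%C
     = cprod (fun i => (z - root_r h i)%C) (h + 1)) /\
  (* [z^n] 1/(1 - 2z + z^(h+1)) = - sum_i r_i^{-(n+1)} prod_{j<>i} (r_i - r_j)^{-1} *)
  (exists a : nat -> C,
     is_expansion_at0 (fun z => / (RtoC 1 - RtoC 2 * z + Cpow z (h + 1)))%C a) /\
  (forall a : nat -> C,
     is_expansion_at0 (fun z => / (RtoC 1 - RtoC 2 * z + Cpow z (h + 1)))%C a ->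
     forall n : nat,
       a n = (- csum (fun i =>
                 / Cpow (root_r h i) (n + 1) *
                 cprod (fun j => if Nat.eqb j i then RtoC 1
                                 else / (root_r h i - root_r h j)) (h + 1))
               (h + 1))%C).
Proof.
  split; [|split; [|split; [|split]]].
  - apply ex_series_Bterm; [apply fuss_denom_neq_0|].
    rewrite Cmod_R, Rabs_pos_eq by (apply Rlt_le, Rdiv_lt_0_compat; [lra | apply pow_lt; lra]).
    apply fuss_series_bounds, Hh.
  - intros j Hj. apply ex_series_Bterm; [intros m; apply branch_denom_neq_0; lia|].
    fold (xmod h). fold (xpoint h j). rewrite Cmod_xpoint. apply abs_conv_branch_xmod, Hh.
  - apply trinomial_eq_cprod, Hh.
  - exists (recip_coef (root_r h) h), (1 / 2). split; [lra|].
    intros z Hz. apply is_pseries_inv_trinomial; auto.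
  - intros a [rho [Hrho Ha]] n.
    apply (is_pseries_C_coef_unique a (recip_coef (root_r h) h) (Rmin rho (1 / 2)) (fun z => / trinomial h z)%C).
    + apply Rmin_glb_lt; lra.
    + intros z Hz. apply Ha. eapply Rlt_le_trans; [exact Hz | apply Rmin_l].
    + intros z Hz. apply is_pseries_inv_trinomial; auto.
      eapply Rlt_le_trans; [exact Hz | apply Rmin_r].
Qed.
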